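(* For $i=1,2$ let $F_i$ be a field of characteristic different from $2$, let $a_i\in F_i^\times\setminus F_i^{\times 2}$, $K_i=F_i(\sqrt{a_i})$, $G_i=\mathrm{Gal}(K_i/F_i)$, and $T_i=K_i^\times/K_i^{\times 2}$. Let $G$ be a group of order $2$ and regard each $T_i$ as an $\mathbb{F}_2[G]$-module via the isomorphism $G\to G_i$. Let $\Upsilon(K_i)=1$ if $-1\in N(K_i^\times)$ and $\Upsilon(K_i)=0$ otherwise. Then $T_1\cong T_2$ as $\mathbb{F}_2[G]$-modules if and only if both of the following hold: (1) $2\Upsilon(K_1)+\dim_{\mathbb{F}_2}F_1^\times/N(K_1^\times) = 2\Upsilon(K_2)+\dim_{\mathbb{F}_2}F_2^\times/N(K_2^\times)$; (2) $\Upsilon(K_2)+\dim_{\mathbb{F}_2}N(K_1^\times)/F_1^{\times 2} = \Upsilon(K_1)+\dim_{\mathbb{F}_2}N(K_2^\times)/F_2^{\times 2}$.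
   Context: $N(K_i^\times)\subseteq F_i^\times$ denotes the group of norms from $K_i$ to $F_i$; it contains $F_i^{\times 2}$. Dimensions are as $\mathbb{F}_2$-vector spaces (cardinal numbers). *)

From mathcomp Require Import all_boot all_algebra.
From Stdlib Require Import ClassicalEpsilon.
Set Implicit Arguments. Unset Strict Implicit. Unset Printing Implicit Defensive.
Import GRing.Theory.
Local Open Scope ring_scope.

Definition units_of (F : fieldType) (c : F) : Prop := c != 0.

Definition squares_of (F : fieldType) (c : F) : Prop :=
  exists y : F, y != 0 /\ c = y ^+ 2.

Definition norms_of (F K : fieldType) (i : F -> K) (s : K -> K) (c : F) : Prop :=
  exists x : K, x != 0 /\ i c = x * s x.

Definition is_quad_ext (F K : fieldType) (i : {rmorphism F -> K}) (a : F) (r : K) : Prop :=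
  r ^+ 2 = i a /\ forall x : K, exists u v : F, x = i u + i v * r.

Definition is_gal_generator (F K : fieldType) (i : {rmorphism F -> K})
  (s : {rmorphism K -> K}) : Prop :=
  bijective s /\ (forall c : F, s (i c) = i c) /\ exists x : K, s x != x.

Definition Upsilon (F K : fieldType) (i : F -> K) (s : K -> K) : nat :=
  if excluded_middle_informative (norms_of i s (-1)) then 1%N else 0%N.

(* B is (the image of) an F_2-basis of the elementary abelian 2-group S/H,
   where H <= S <= F^x (written multiplicatively): B is a subset of S such that
   no nonempty product of distinct elements of B lies in H, and every element of
   S is congruent mod H to a finite product of elements of B. *)
Definition qbasis (F : fieldType) (S H B : F -> Prop) : Prop :=
  (forall x, B x -> S x) /\
  (forall s : seq F, uniq s -> (forall x, x \in s -> B x) ->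
      H (\prod_(x <- s) x) -> s = [::]) /\
  (forall y, S y -> exists s : seq F, (forall x, x \in s -> B x) /\
      H (y / \prod_(x <- s) x)).

(* The cardinal equality  n1 + dim_F2 (S1/H1) = n2 + dim_F2 (S2/H2). *)
Definition dim_plus_eq (F1 F2 : fieldType) (n1 : nat) (S1 H1 : F1 -> Prop)
  (n2 : nat) (S2 H2 : F2 -> Prop) : Prop :=
  exists (B1 : F1 -> Prop) (B2 : F2 -> Prop),
    qbasis S1 H1 B1 /\ qbasis S2 H2 B2 /\
    exists f : ('I_n1 + {x : F1 | B1 x})%type -> ('I_n2 + {x : F2 | B2 x})%type,
      bijective f.

Definition sq_equiv (K : fieldType) (x y : K) : Prop :=
  exists z : K, z != 0 /\ x = y * z ^+ 2.

(* T1 = K1^x/K1^{x2} and T2 = K2^x/K2^{x2} are isomorphic F_2[G]-modules,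
   the generator of G acting by s1 resp. s2.  The isomorphism is given on
   representatives: phi induces a well-defined group homomorphism
   T1 -> T2 (multiplicative mod squares), which is G-equivariant, injective
   (trivial kernel) and surjective. *)
Definition T_iso (K1 K2 : fieldType) (s1 : K1 -> K1) (s2 : K2 -> K2) : Prop :=
  exists phi : K1 -> K2,
    (forall x, x != 0 -> phi x != 0) /\
    (forall x y, x != 0 -> y != 0 -> sq_equiv (phi (x * y)) (phi x * phi y)) /\
    (forall x, x != 0 -> sq_equiv (phi (s1 x)) (s2 (phi x))) /\
    (forall x, x != 0 -> sq_equiv (phi x) 1 -> sq_equiv x 1) /\
    (forall y, y != 0 -> exists x, x != 0 /\ sq_equiv (phi x) y).

(* The involution [s] of [K] acts on [T = K^x / K^x2], with the [s]-fixed
   classes [T^s] containing the classes [N'] of the norms [N = N(K^x)].  Since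
   [T / T^s ~ N'] through the norm map [x |-> x s(x)], an [F_2[G]]-module of
   this shape is determined by [dim N'] and [dim T^s / N']: for bases [J] of
   [N'] and [R] of [T^s / N'] and a section [w] of the norm over [J], the
   classes [J], [R] and [w(J)] form a basis of [T] on which [s] fixes [J] and
   [R] and sends [w(y)] to [y w(y)].  On the other hand, if [-1] is not a norm
   then [N' ~ N / F^x2] and [T^s / N' ~ F^x / N<a>], while if it is then
   [N' ~ N / F^x2<a>] and [T^s / N'<x0> ~ F^x / N] for a fixed class [x0] not
   coming from [F] (by Hilbert 90).  Hence [dim N / F^x2 = Upsilon + dim N']
   and [dim F^x / N + 2 Upsilon = dim T^s / N' + 1], and the two conditions
   of the theorem say exactly that [dim N'] and [dim T^s / N'] agree for [K1]
   and [K2]. *)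

From mathcomp Require Import all_boot all_algebra ring.
From Stdlib Require Import ClassicalEpsilon.
From mathcomp Require classical_sets boolp.
Set Implicit Arguments. Unset Strict Implicit. Unset Printing Implicit Defensive.
Import GRing.Theory.
Local Open Scope ring_scope.

Section Subgroup.
Variables (F : fieldType) (H : F -> Prop).

Definition is_subgroup :=
  [/\ H 1, (forall x y, H x -> H y -> H (x * y)),
      (forall x, H x -> H x^-1) & (forall x, H x -> x != 0)].

Hypothesis sH : is_subgroup.

Lemma subgroup1 : H 1. Proof. by case: sH. Qed.
Lemma subgroupM x y : H x -> H y -> H (x * y). Proof. by case: sH => _ h _ _; apply: h. Qed.
Lemma subgroupV x : H x -> H x^-1. Proof. by case: sH => _ _ h _; apply: h. Qed.
Lemma subgroup_neq0 x : H x -> x != 0. Proof. by case: sH => _ _ _ h; apply: h. Qed.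

Lemma subgroupD x y : H x -> H y -> H (x / y).
Proof. by move=> Hx Hy; apply: subgroupM => //; apply: subgroupV. Qed.

Lemma subgroup_prod (T : eqType) (s : seq T) (h : T -> F) :
  (forall x, x \in s -> H (h x)) -> H (\prod_(x <- s) h x).
Proof.
elim: s => [|y s IH] hs; first by rewrite big_nil; apply: subgroup1.
rewrite big_cons; apply: subgroupM; first by apply: hs; rewrite mem_head.
by apply: IH => x xs; apply: hs; rewrite inE xs orbT.
Qed.

(* [H (x / y)] says that [x] and [y] agree in the quotient by [H]. *)
Lemma quot_refl x : x != 0 -> H (x / x).
Proof. by move=> x0; rewrite divff //; apply: subgroup1. Qed.

Lemma quot_sym x y : H (x / y) -> H (y / x).
Proof. by move=> h; rewrite -invf_div; apply: subgroupV. Qed.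

(* Since [x / 0 = 0] and [0] is not in [H], congruence forces nonzero terms. *)
Lemma quot_neq0 x y : H (x / y) -> (x != 0) && (y != 0).
Proof. by move/subgroup_neq0; rewrite mulf_eq0 invr_eq0 negb_or. Qed.

Lemma quot_trans y x z : H (x / y) -> H (y / z) -> H (x / z).
Proof.
move=> hxy hyz; have /andP[_ y0] := quot_neq0 hxy.
by have := subgroupM hxy hyz; rewrite mulrA mulfVK.
Qed.

Lemma quot_mul x y x' y' : H (x / x') -> H (y / y') -> H ((x * y) / (x' * y')).
Proof. by move=> h1 h2; rewrite invfM mulrACA; apply: subgroupM. Qed.

Lemma quot_prod (T : eqType) (s : seq T) (h1 h2 : T -> F) :
  (forall x, x \in s -> H (h1 x / h2 x)) ->
  H (\prod_(x <- s) h1 x / \prod_(x <- s) h2 x).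
Proof.
elim: s => [|y s IH] hs; first by rewrite !big_nil divr1; apply: subgroup1.
rewrite !big_cons; apply: quot_mul; first by apply: hs; rewrite mem_head.
by apply: IH => x xs; apply: hs; rewrite inE xs orbT.
Qed.

Lemma quot_memL x y : H (x / y) -> H y -> H x.
Proof.
move=> hxy hy; have /andP[_ y0] := quot_neq0 hxy.
by have := subgroupM hxy hy; rewrite divfK.
Qed.

Lemma quot_memE x y : H (x / y) -> H x <-> H y.
Proof.
move=> hxy; split=> [hx|]; last exact: quot_memL.
by apply: quot_memL (quot_sym hxy) hx.
Qed.

End Subgroup.

Lemma subgroup_units (F : fieldType) : is_subgroup (@units_of F).
Proof.
by split=> [|x y|x|x]; rewrite /units_of ?oner_neq0 ?invr_eq0 //; apply: mulf_neq0.
Qed.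

Lemma subgroup_squares (F : fieldType) : is_subgroup (@squares_of F).
Proof.
split.
- by exists 1; rewrite oner_neq0 expr1n.
- move=> _ _ [u [u0 ->]] [v [v0 ->]].
  by exists (u * v); rewrite mulf_neq0 // exprMn.
- by move=> _ [u [u0 ->]]; exists u^-1; rewrite invr_eq0 u0 exprVn.
- by move=> _ [u [u0 ->]]; rewrite expf_neq0.
Qed.

Lemma squares_sqr (F : fieldType) (x : F) : x != 0 -> squares_of (x * x).
Proof. by move=> x0; exists x; rewrite expr2. Qed.

Lemma sq_equivP (F : fieldType) (x y : F) :
  y != 0 -> sq_equiv x y <-> squares_of (x / y).
Proof.
move=> y0; split; first by move=> [z [z0 ->]]; exists z; rewrite mulrAC divff ?mul1r.
by move=> [z [z0 e]]; exists z; rewrite -e mulrC divfK.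
Qed.

Definition symdiff (T : eqType) (s t : seq T) :=
  [seq x <- s | x \notin t] ++ [seq x <- t | x \notin s].

Lemma symdiff_uniq (T : eqType) (s t : seq T) : uniq s -> uniq t -> uniq (symdiff s t).
Proof.
move=> us ut; rewrite cat_uniq !filter_uniq //= andbT.
by apply/hasPn => x; rewrite !mem_filter => /andP[/negbTE-> _]; rewrite andbF.
Qed.

Lemma mem_symdiff (T : eqType) (s t : seq T) x :
  x \in symdiff s t -> (x \in s) || (x \in t).
Proof. by rewrite mem_cat !mem_filter => /orP[]/andP[_ ->]; rewrite ?orbT. Qed.

Lemma prod_symdiff (F : fieldType) (T : eqType) (h : T -> F) (s t : seq T) :
  uniq s -> uniq t ->
  \prod_(x <- s) h x * \prod_(x <- t) h x =
  (\prod_(x <- [seq x <- s | x \in t]) h x) ^+ 2 * \prod_(x <- symdiff s t) h x.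
Proof.
move=> us ut.
have split_prod (u v : seq T) : \prod_(x <- u) h x =
    \prod_(x <- [seq x <- u | x \in v]) h x * \prod_(x <- [seq x <- u | x \notin v]) h x.
  by rewrite !big_filter; apply: bigID.
have pe : perm_eq [seq x <- t | x \in s] [seq x <- s | x \in t].
  by apply: uniq_perm; rewrite ?filter_uniq // => x; rewrite !mem_filter andbC.
rewrite (split_prod s t) (split_prod t s) (perm_big _ pe) /symdiff big_cat expr2.
by rewrite mulrACA.
Qed.

(** * Quotients of exponent two *)

(* [S] and [H] are subgroups [H <= S] of the multiplicative group of a field
   with [S^2 <= H]: [S / H] is an [F_2]-vector space and [qbasis S H] is a
   basis of it. *)
Section Elementary2.
Variables (F : fieldType) (S H : F -> Prop).

Definition elementary2 :=
  [/\ is_subgroup S, is_subgroup H, (forall x, H x -> S x) & (forall x, S x -> H (x * x))].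

Definition indep (B : F -> Prop) :=
  forall s : seq F, uniq s -> (forall x, x \in s -> B x) ->
    H (\prod_(x <- s) x) -> s = [::].

Definition spans (B : F -> Prop) :=
  forall y, S y -> exists s : seq F, (forall x, x \in s -> B x) /\
    H (y / \prod_(x <- s) x).

Lemma qbasis_sub B : qbasis S H B -> forall x, B x -> S x. Proof. by case. Qed.
Lemma qbasis_indep B : qbasis S H B -> indep B. Proof. by case=> _ []. Qed.
Lemma qbasis_spans B : qbasis S H B -> spans B. Proof. by case=> _ []. Qed.

Lemma qbasis_notin B x : qbasis S H B -> B x -> ~ H x.
Proof.
move=> qB Bx hx.
have sB z : z \in [:: x] -> B z by rewrite inE => /eqP ->.
have := qbasis_indep qB (s := [:: x]) isT sB.
by rewrite big_seq1 => /(_ hx).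
Qed.


Hypothesis E : elementary2.

Lemma elem_super : is_subgroup S. Proof. by case: E. Qed.
Lemma elem_sub : is_subgroup H. Proof. by case: E. Qed.
Lemma elem_le x : H x -> S x. Proof. by case: E => _ _ h _; apply: h. Qed.
Lemma elem_sqr x : S x -> H (x * x). Proof. by case: E => _ _ _ h; apply: h. Qed.
Lemma elem_expr2 x : S x -> H (x ^+ 2). Proof. by rewrite expr2; apply: elem_sqr. Qed.
Lemma elem_neq0 x : S x -> x != 0. Proof. exact: (subgroup_neq0 elem_super). Qed.

Lemma elem_prod (T : eqType) (s : seq T) (h : T -> F) :
  (forall x, x \in s -> S (h x)) -> S (\prod_(x <- s) h x).
Proof. exact: (subgroup_prod elem_super). Qed.

Lemma elem_divM x y : S y -> H (x * y) -> H (x / y).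
Proof.
move=> Sy h; have := subgroupD elem_sub h (elem_sqr Sy).
by rewrite invfM mulrA mulfK // elem_neq0.
Qed.

Lemma elem_mulM x y : S y -> H (x / y) -> H (x * y).
Proof.
move=> Sy h; have := subgroupM elem_sub h (elem_sqr Sy).
by rewrite mulrA mulfVK // elem_neq0.
Qed.

(* Multiplying two representations: the common factors square away. *)
Lemma quot_prod_symdiff (s t : seq F) : uniq s -> uniq t ->
  (forall x, x \in s -> S x) -> (forall x, x \in t -> S x) ->
  H (\prod_(x <- s) x * \prod_(x <- t) x / \prod_(x <- symdiff s t) x).
Proof.
move=> us ut sS tS.
have SI : S (\prod_(x <- [seq x <- s | x \in t]) x).
  by apply: elem_prod => x; rewrite mem_filter => /andP[_ /sS].
have SD : S (\prod_(x <- symdiff s t) x).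
  by apply: elem_prod => x /mem_symdiff /orP[/sS|/tS].
by rewrite (prod_symdiff (fun x => x) us ut) mulfK ?elem_neq0 //; apply: elem_expr2.
Qed.

Lemma quot_mul_symdiff x y s t : uniq s -> uniq t ->
  (forall z, z \in s -> S z) -> (forall z, z \in t -> S z) ->
  H (x / \prod_(z <- s) z) -> H (y / \prod_(z <- t) z) ->
  H (x * y / \prod_(z <- symdiff s t) z).
Proof.
move=> us ut sS tS hx hy.
exact: (quot_trans elem_sub (quot_mul elem_sub hx hy) (quot_prod_symdiff us ut sS tS)).
Qed.

Lemma uniq_prod_rep (B : F -> Prop) (s : seq F) : (forall x, B x -> S x) ->
  (forall x, x \in s -> B x) ->
  exists t, [/\ uniq t, (forall x, x \in t -> B x) &
                H (\prod_(x <- s) x / \prod_(x <- t) x)].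
Proof.
move=> BS; elim: s => [|y s IH] hs.
  by exists [::]; rewrite !big_nil divr1; split=> //; apply: (subgroup1 elem_sub).
have [|t [ut tB ht]] := IH; first by move=> x xs; apply: hs; rewrite inE xs orbT.
have Sy : S y by apply/BS/hs; rewrite mem_head.
have St : S (\prod_(x <- t) x) by apply: elem_prod => x /tB /BS.
have hy : H ((y * \prod_(x <- s) x) / (y * \prod_(x <- t) x)).
  exact: (quot_mul elem_sub (quot_refl elem_sub (elem_neq0 Sy)) ht).
case yt: (y \in t); last first.
  exists (y :: t); split; last by rewrite !big_cons.
    by rewrite /= yt ut.
  by move=> x /predU1P[->|/tB //]; apply: hs; rewrite mem_head.
exists (rem y t); split; first exact: rem_uniq.
  by move=> x /mem_rem /tB.
rewrite big_cons; apply: (quot_trans elem_sub hy).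
have Sr : S (\prod_(x <- rem y t) x) by apply: elem_prod => x /mem_rem /tB /BS.
rewrite (perm_big _ (perm_to_rem yt)) big_cons /= mulrA.
by rewrite mulfK ?elem_neq0 //; apply: elem_sqr.
Qed.

Lemma qbasis_uniq_rep B y : qbasis S H B -> S y ->
  exists t, [/\ uniq t, (forall x, x \in t -> B x) & H (y / \prod_(x <- t) x)].
Proof.
move=> qB Sy; have [s [sB hs]] := qbasis_spans qB Sy.
have [t [ut tB ht]] := uniq_prod_rep (qbasis_sub qB) sB.
by exists t; split => //; apply: (quot_trans elem_sub hs ht).
Qed.

Lemma qbasis_perm_rep B s t : qbasis S H B -> uniq s -> uniq t ->
  (forall x, x \in s -> B x) -> (forall x, x \in t -> B x) ->
  H (\prod_(x <- s) x / \prod_(x <- t) x) -> perm_eq s t.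
Proof.
move=> qB us ut sB tB hst; have BS := qbasis_sub qB.
have sS : forall x, x \in s -> S x by move=> x /sB /BS.
have tS : forall x, x \in t -> S x by move=> x /tB /BS.
have hD : H (\prod_(x <- symdiff s t) x).
  have St : S (\prod_(x <- t) x) by apply: elem_prod.
  exact: (quot_memL elem_sub (quot_sym elem_sub (quot_prod_symdiff us ut sS tS))
                    (elem_mulM St hst)).
have DB x : x \in symdiff s t -> B x by move/mem_symdiff/orP=> [/sB|/tB].
have D0 := qbasis_indep qB (symdiff_uniq us ut) DB hD.
apply: uniq_perm => // x; apply/idP/idP => xs; apply: contraT => xt.
  have : x \in symdiff s t by rewrite mem_cat mem_filter xs xt.
  by rewrite D0.
have : x \in symdiff s t by rewrite mem_cat orbC mem_filter xs xt.
by rewrite D0.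
Qed.

Lemma qbasis_congr_eq B x y : qbasis S H B -> B x -> B y -> H (x / y) -> x = y.
Proof.
move=> qB Bx By hxy.
have sB z : z \in [:: x] -> B z by rewrite inE => /eqP ->.
have tB z : z \in [:: y] -> B z by rewrite inE => /eqP ->.
have := @qbasis_perm_rep B [:: x] [:: y] qB isT isT sB tB.
by rewrite !big_seq1 => /(_ hxy) /(perm_small_eq (isT : (size [:: y] <= 1)%N)) [].
Qed.

End Elementary2.

Section BasisExistence.
Variables (F : fieldType) (S H : F -> Prop).
Hypothesis E : elementary2 S H.

Lemma indep_adjoin B y : (forall x, B x -> S x) -> indep H B ->
  ~ (exists s, (forall x, x \in s -> B x) /\ H (y / \prod_(x <- s) x)) ->
  indep H (fun x => B x \/ x = y).
Proof.
move=> BS iB nsp s us sB hs.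
case ys: (y \in s); last first.
  by apply: iB => // x xs; case: (sB x xs) => // xy; move: xs; rewrite xy ys.
have rB x : x \in rem y s -> B x.
  rewrite (mem_rem_uniq _ us) => /andP[xy xs].
  by case: (sB x xs) => // /eqP; rewrite (negbTE xy).
case: nsp; exists (rem y s); split=> //.
apply: (elem_divM E); first by apply: (elem_prod E) => x /rB /BS.
by move: hs; rewrite (perm_big _ (perm_to_rem ys)) big_cons.
Qed.

Lemma indep_chain (C : (F -> Prop) -> Prop) :
  (forall B, C B -> indep H B) ->
  (forall B B', C B -> C B' -> (forall x, B x -> B' x) \/ (forall x, B' x -> B x)) ->
  indep H (fun x => exists2 B, C B & B x).
Proof.
move=> iC tC.
suff cover s : (forall x, x \in s -> exists2 B, C B & B x) ->
    s = [::] \/ exists2 B, C B & forall x, x \in s -> B x.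
  by move=> s us /cover [//|[B CB sB]]; apply: iC CB s us sB.
elim: s => [|y s IH] hs; first by left.
have [B CB By] := hs y (mem_head _ _).
have sC : forall x, x \in s -> exists2 B, C B & B x.
  by move=> x xs; apply: hs; rewrite inE xs orbT.
have [->|[B' CB' sB']] := IH sC; first by right; exists B => // x /predU1P[->|].
right; have [BB'|B'B] := tC _ _ CB CB'.
  by exists B' => // x /predU1P[->|/sB'] //; apply: BB'.
by exists B => // x /predU1P[->|/sB' /B'B].
Qed.

(* Zorn's lemma: a maximal independent subset of [S] spans [S / H]. *)
Lemma qbasis_exists : exists B, qbasis S H B.
Proof.
pose P (B : F -> Prop) := indep H B /\ (forall x, B x -> S x).
have [|B [[iB BS] Bmax]] := @classical_sets.Zorn_bigcup F P.
  move=> C CP tC; split; last by move=> x [B /CP [_ BS] /BS].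
  apply: indep_chain => [B /CP [] //|B B' CB CB'].
  by have [] := tC B B' CB CB'; [left|right].
exists B; split=> //; split=> // y Sy; apply: boolp.contrapT => nsp.
have nBy : ~ B y.
  move=> By; apply: nsp; exists [:: y]; split; first by move=> x /[!inE] /eqP ->.
  by rewrite big_seq1; apply: (quot_refl (elem_sub E)); apply: (elem_neq0 E).
apply: (Bmax (fun x => B x \/ x = y)); last first.
  by split; [exact: indep_adjoin | move=> x [/BS|->]].
by split=> [x Bx|/(_ y (or_intror erefl))]; [left|].
Qed.

End BasisExistence.

Definition img (A B : Type) (f : A -> B) (P : A -> Prop) (y : B) :=
  exists x, P x /\ y = f x.

Lemma seq_in_img (A B : eqType) (f : A -> B) P (t : seq B) :
  (forall y, y \in t -> img f P y) ->
  exists u, (forall x, x \in u -> P x) /\ t = map f u.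
Proof.
elim: t => [|y t IH] ht; first by exists [::].
have [x [Px ->]] := ht y (mem_head _ _).
have /IH [u [uP ->]] : forall z, z \in t -> img f P z.
  by move=> z zt; apply: ht; rewrite inE zt orbT.
by exists (x :: u); split=> // z /predU1P[->|/uP].
Qed.

(** * Isomorphisms of quotients *)

(* [f] induces an isomorphism of [S / H] onto [S' / H']. *)
Definition quot_iso (F1 F2 : fieldType) (S H : F1 -> Prop) (S' H' : F2 -> Prop)
    (f : F1 -> F2) :=
  [/\ (forall x, S x -> S' (f x)),
      (forall x y, S x -> S y -> H' (f (x * y) / (f x * f y))),
      (forall x, S x -> (H' (f x) <-> H x)) &
      (forall y, S' y -> exists x, S x /\ H' (y / f x))].

Section QuotIso.
Variables (F1 F2 : fieldType) (S H : F1 -> Prop) (S' H' : F2 -> Prop).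
Hypotheses (E : elementary2 S H) (E' : elementary2 S' H').

Variable f : F1 -> F2.
Hypothesis qf : quot_iso S H S' H' f.

Lemma quot_iso_mem x : S x -> S' (f x). Proof. by case: qf => h _ _ _; apply: h. Qed.
Lemma quot_iso_morph x y : S x -> S y -> H' (f (x * y) / (f x * f y)).
Proof. by case: qf => _ h _ _; apply: h. Qed.
Lemma quot_iso_ker x : S x -> H' (f x) <-> H x. Proof. by case: qf => _ _ h _; apply: h. Qed.
Lemma quot_iso_surj y : S' y -> exists x, S x /\ H' (y / f x).
Proof. by case: qf => _ _ _ h; apply: h. Qed.

Lemma quot_iso_div x y : S x -> S y -> H' (f (x / y) / (f x / f y)).
Proof.
move=> Sx Sy; have Sxy : S (x / y) by apply: (subgroupD (elem_super E)).
have := quot_sym (elem_sub E') (quot_iso_morph Sxy Sy).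
by rewrite mulfVK ?(elem_neq0 E) // invf_div mulrA.
Qed.

Lemma quot_isoE x y : S x -> S y -> H' (f x / f y) <-> H (x / y).
Proof.
move=> Sx Sy; rewrite -quot_iso_ker; last exact: (subgroupD (elem_super E)).
exact: iff_sym (quot_memE (elem_sub E') (quot_iso_div Sx Sy)).
Qed.

Lemma quot_iso_prod (s : seq F1) : (forall x, x \in s -> S x) ->
  H' (f (\prod_(x <- s) x) / \prod_(x <- s) f x).
Proof.
have S1 := subgroup1 (elem_super E).
elim: s => [|y s IH] hs.
  rewrite !big_nil divr1.
  have f10 : f 1 != 0 by apply/(elem_neq0 E')/quot_iso_mem.
  have := quot_iso_morph S1 S1; rewrite mulr1 invfM mulrA divff // mul1r.
  by move/(subgroupV (elem_sub E')); rewrite invrK.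
have Sy : S y := hs y (mem_head _ _).
have sS : forall x, x \in s -> S x by move=> x xs; apply: hs; rewrite inE xs orbT.
have Sp : S (\prod_(x <- s) x) by apply: (elem_prod E).
rewrite !big_cons; apply: (quot_trans (elem_sub E') (quot_iso_morph Sy Sp)).
have fy0 : f y != 0 by apply/(elem_neq0 E')/quot_iso_mem.
exact: (quot_mul (elem_sub E') (quot_refl (elem_sub E') fy0) (IH sS)).
Qed.

Lemma quot_iso_inv : exists g,
  quot_iso S' H' S H g /\ forall y, S' y -> H' (y / f (g y)).
Proof.
have sH' := elem_sub E'.
pose g y := epsilon (inhabits 0) (fun x => S x /\ H' (y / f x)).
have gP y : S' y -> S (g y) /\ H' (y / f (g y)).
  move=> Sy; apply: (epsilon_spec (inhabits 0) (fun x => S x /\ H' (y / f x))).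
  exact: quot_iso_surj.
exists g; split; last by move=> y /gP [].
split.
- by move=> y /gP [].
- move=> y z Sy Sz.
  have Syz : S' (y * z) by apply: (subgroupM (elem_super E')).
  have [Sgy hy] := gP y Sy; have [Sgz hz] := gP z Sz; have [Sgyz hyz] := gP _ Syz.
  have Sgg : S (g y * g z) by apply: (subgroupM (elem_super E)).
  apply/(quot_isoE Sgyz Sgg); apply: (quot_trans sH' (quot_sym sH' hyz)).
  apply: (quot_trans sH' (quot_mul sH' hy hz)).
  exact: (quot_sym sH' (quot_iso_morph Sgy Sgz)).
- move=> y Sy; have [Sgy hy] := gP y Sy.
  by rewrite -(quot_iso_ker Sgy); apply: iff_sym; apply: (quot_memE sH' hy).
- move=> x Sx; have [Sgfx hfx] := gP _ (quot_iso_mem Sx).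
  by exists (f x); split; [apply: quot_iso_mem | apply/(quot_isoE Sx Sgfx)].
Qed.

Lemma quot_iso_qbasis B : qbasis S H B ->
  qbasis S' H' (img f B) /\ (forall x y, B x -> B y -> f x = f y -> x = y).
Proof.
move=> qB; have BS := qbasis_sub qB; have sH' := elem_sub E'.
split; last first.
  move=> x y Bx By fxy; apply: (qbasis_congr_eq E qB Bx By).
  apply/(quot_isoE (BS _ Bx) (BS _ By)); rewrite fxy.
  exact/(quot_refl sH')/(elem_neq0 E')/quot_iso_mem/BS.
split; first by move=> _ [x [Bx ->]]; apply/quot_iso_mem/BS.
split.
  move=> t ut /seq_in_img [u [uB tu]]; subst t; rewrite big_map => hu.
  have uS : forall x, x \in u -> S x by move=> x /uB /BS.
  suff hu' : H (\prod_(x <- u) x) by rewrite (qbasis_indep qB (map_uniq ut) uB hu').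
  apply/quot_iso_ker; first exact: (elem_prod E).
  exact: (quot_memL sH' (quot_iso_prod uS) hu).
move=> y Sy; have [x [Sx hy]] := quot_iso_surj Sy.
have [u [uB hu]] := qbasis_spans qB Sx.
have uS : forall x, x \in u -> S x by move=> z /uB /BS.
exists (map f u); split; first by move=> _ /mapP[z zu ->]; exists z; split => //; apply: uB.
rewrite big_map; apply: (quot_trans sH' hy); apply: (quot_trans sH' _ (quot_iso_prod uS)).
by apply/quot_isoE => //; apply: (elem_prod E).
Qed.

End QuotIso.

Lemma quot_iso_qbasis_pre (F1 F2 : fieldType) (S H : F1 -> Prop) (S' H' : F2 -> Prop)
    (f : F1 -> F2) B' :
  elementary2 S H -> elementary2 S' H' -> quot_iso S H S' H' f -> qbasis S' H' B' ->
  exists g : F2 -> F1, [/\ qbasis S H (img g B'),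
    (forall x y, B' x -> B' y -> g x = g y -> x = y) &
    (forall y, B' y -> H' (y / f (g y)))].
Proof.
move=> E E' qf qB'; have [g [qg gf]] := quot_iso_inv E E' qf.
have [qgB ginj] := quot_iso_qbasis E' E qg qB'.
by exists g; split=> // y /(qbasis_sub qB') /gf.
Qed.

Section Adjoin.
Variables (F : fieldType) (S H : F -> Prop).
Hypothesis E : elementary2 S H.

Definition adjoin (v : F) x := H x \/ H (x * v).

Lemma elementary2_adjoin v : S v -> elementary2 S (adjoin v).
Proof.
move=> Sv; have v0 := elem_neq0 E Sv; have sH := elem_sub E; have sS := elem_super E.
have Hvv := elem_sqr E Sv.
split=> //.
- split; first by left; apply: (subgroup1 sH).
  + move=> x y [hx|hx] [hy|hy].
    * by left; apply: (subgroupM sH).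
    * by right; rewrite -mulrA; apply: (subgroupM sH).
    * by right; rewrite mulrAC; apply: (subgroupM sH).
    * left; have := subgroupD sH (subgroupM sH hx hy) Hvv.
      by rewrite mulrACA mulfK // mulf_neq0.
  + move=> x [hx|hx]; first by left; apply: (subgroupV sH).
    right; have := subgroupM sH (subgroupV sH hx) Hvv.
    by rewrite invfM mulrACA mulVf // mulr1.
  + by move=> x [/(subgroup_neq0 sH) //|/(subgroup_neq0 sH)]; rewrite mulf_eq0 negb_or => /andP[].
- move=> x [/(elem_le E) //|/(elem_le E) hx].
  by have := subgroupD sS hx Sv; rewrite mulfK.
- by move=> x Sx; left; apply: (elem_sqr E).
Qed.

(* Steinitz exchange: [v] takes the place of the first basis vector of its
   coordinate expansion. *)
Lemma qbasis_exchange B v : qbasis S H B -> S v -> ~ H v ->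
  exists b0, B b0 /\ qbasis S (adjoin v) (fun x => B x /\ x != b0).
Proof.
move=> qB Sv nHv; have BS := qbasis_sub qB; have sH := elem_sub E.
have [[|b0 s'] [us sB hs]] := qbasis_uniq_rep E qB Sv.
  by case: nHv; move: hs; rewrite big_nil divr1.
set s := b0 :: s' in us sB hs.
have sS x : x \in s -> S x by move/sB/BS.
have Ss : S (\prod_(x <- s) x) by apply: (elem_prod E).
exists b0; split; first by apply: sB; rewrite mem_head.
split; first by move=> x [/BS].
split.
  move=> t ut tB [ht|ht]; first by apply: (qbasis_indep qB ut) => // x /tB [].
  have hts : H (\prod_(x <- t) x / \prod_(x <- s) x).
    apply: (elem_divM E Ss); have v0 := elem_neq0 E Sv.
    suff -> : \prod_(x <- t) x * \prod_(x <- s) x =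
              (\prod_(x <- t) x * v) * (\prod_(x <- s) x / v).
      exact: (subgroupM sH ht (quot_sym sH hs)).
    by field.
  have := qbasis_perm_rep E qB ut us (fun x xt => proj1 (tB x xt)) sB hts.
  move/perm_mem/(_ b0); rewrite mem_head => /tB [_].
  by rewrite eqxx.
move=> y Sy; have [u [uu uB hu]] := qbasis_uniq_rep E qB Sy.
have uS x : x \in u -> S x by move/uB/BS.
case b0u: (b0 \in u); last first.
  exists u; split; last by left.
  by move=> x xu; split; [apply: uB | apply/eqP => xb; move: xu; rewrite xb b0u].
exists (symdiff u s); split.
  move=> x xd; split; first by case/orP: (mem_symdiff xd) => [/uB|/sB].
  apply: contraTneq xd => ->.
  by rewrite mem_cat !mem_filter b0u mem_head.
by right; rewrite mulrAC; apply: (quot_mul_symdiff E uu us uS sS hu hs).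
Qed.

Lemma qbasis_adjoin B v : qbasis S (adjoin v) B -> S v -> ~ H v ->
  qbasis S H (fun x => B x \/ x = v) /\ ~ B v.
Proof.
move=> qB Sv nHv; have BS := qbasis_sub qB; have sH := elem_sub E.
have v0 := elem_neq0 E Sv.
have nBv : ~ B v.
  by move=> Bv; apply: (qbasis_notin qB Bv); right; apply: (elem_sqr E).
split=> //; split; first by move=> x [/BS|->].
split.
  move=> t ut tB ht; case vt: (v \in t); last first.
    apply: (qbasis_indep qB ut) => [x xt|]; last by left.
    by case: (tB x xt) => // xv; move: xt; rewrite xv vt.
  have rB x : x \in rem v t -> B x.
    rewrite (mem_rem_uniq _ ut) => /andP[xv xt].
    by case: (tB x xt) => // /eqP; rewrite (negbTE xv).
  have hr : H (\prod_(x <- rem v t) x * v).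
    by move: ht; rewrite (perm_big _ (perm_to_rem vt)) big_cons mulrC.
  have r0 : rem v t = [::] by apply: (qbasis_indep qB (rem_uniq _ ut) rB); right.
  by case: nHv; move: hr; rewrite r0 big_nil mul1r.
move=> y Sy; have [u [uB [hu|hu]]] := qbasis_spans qB Sy.
  by exists u; split=> // x /uB; left.
exists (v :: u); split; first by move=> x /predU1P[->|/uB]; [right|left].
have := elem_divM E Sv hu.
by rewrite big_cons invfM [_^-1 * _]mulrC mulrA.
Qed.

End Adjoin.

Lemma qbasis_tower (F : fieldType) (S M H B1 B2 : F -> Prop) :
  elementary2 S M -> elementary2 M H -> qbasis M H B1 -> qbasis S M B2 ->
  qbasis S H (fun x => B1 x \/ B2 x).
Proof.
move=> ESM EMH q1 q2.
have B1S x : B1 x -> S x by move/(qbasis_sub q1)/(elem_le ESM).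
have B2S := qbasis_sub q2.
split; first by move=> x [/B1S|/B2S].
split.
  move=> t ut tB ht.
  pose p x := boolp.asbool (B2 x).
  have t1B x : x \in [seq x <- t | ~~ p x] -> B1 x.
    by rewrite mem_filter => /andP[/boolp.asboolPn nb /tB []].
  have t2B x : x \in [seq x <- t | p x] -> B2 x.
    by rewrite mem_filter => /andP[/boolp.asboolP].
  have M1 : M (\prod_(x <- [seq x <- t | ~~ p x]) x).
    by apply: (elem_prod EMH) => x /t1B /(qbasis_sub q1).
  have M2 : M (\prod_(x <- [seq x <- t | p x]) x).
    have e : \prod_(x <- t) x =
        \prod_(x <- [seq x <- t | p x]) x * \prod_(x <- [seq x <- t | ~~ p x]) x.
      by rewrite !big_filter; apply: bigID.
    have := subgroupD (elem_super EMH) (elem_le EMH ht) M1.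
    by rewrite e mulfK // (elem_neq0 EMH).
  have t20 := qbasis_indep q2 (filter_uniq _ ut) t2B M2.
  apply: (qbasis_indep q1 ut) => // x xt.
  case: (tB x xt) => // b2.
  have : x \in [seq x <- t | p x] by rewrite mem_filter xt andbT; apply/boolp.asboolP.
  by rewrite t20.
move=> y Sy.
have [u2 [u2B hu2]] := qbasis_spans q2 Sy.
have [u1 [u1B hu1]] := qbasis_spans q1 hu2.
exists (u1 ++ u2); split; first by move=> x /[!mem_cat] /orP[/u1B|/u2B]; [left|right].
by rewrite big_cat /= invfM mulrA mulrAC.
Qed.

Definition bij_on (A1 A2 : Type) (P1 : A1 -> Prop) (P2 : A2 -> Prop) (g : A1 -> A2) :=
  [/\ (forall x, P1 x -> P2 (g x)),
      (forall x y, P1 x -> P1 y -> g x = g y -> x = y) &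
      (forall y, P2 y -> exists x, P1 x /\ g x = y)].

Section LinearExtension.
Variables (F1 F2 : fieldType) (S1 H1 : F1 -> Prop) (S2 H2 : F2 -> Prop).
Hypotheses (E1 : elementary2 S1 H1) (E2 : elementary2 S2 H2).
Variables (B1 : F1 -> Prop) (B2 : F2 -> Prop) (g : F1 -> F2).
Hypotheses (q1 : qbasis S1 H1 B1) (q2 : qbasis S2 H2 B2) (bg : bij_on B1 B2 g).

Let coords x s := [/\ uniq s, (forall y, y \in s -> B1 y) & H1 (x / \prod_(y <- s) y)].
Let coord x := epsilon (inhabits [::]) (coords x).
Let ext x := \prod_(b <- coord x) g b.

Let coordP x : S1 x -> coords x (coord x).
Proof.
move=> Sx; apply: (epsilon_spec (inhabits [::]) (coords x)).
by have [t [ut tB ht]] := qbasis_uniq_rep E1 q1 Sx; exists t.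
Qed.

Let S2_gprod (s : seq F1) : (forall y, y \in s -> B1 y) -> S2 (\prod_(b <- s) g b).
Proof.
case: bg => gB _ _ sB.
by apply: (elem_prod E2) => y /sB /gB /(qbasis_sub q2).
Qed.

Let extE x s : S1 x -> uniq s -> (forall y, y \in s -> B1 y) ->
  H1 (x / \prod_(y <- s) y) -> ext x = \prod_(b <- s) g b.
Proof.
move=> Sx us sB hs; have [ur rB hr] := coordP Sx.
apply/perm_big/(qbasis_perm_rep E1 q1 ur us rB sB).
exact: (quot_trans (elem_sub E1) (quot_sym (elem_sub E1) hr) hs).
Qed.

Let ext_morph x y : S1 x -> S1 y -> H2 (ext (x * y) / (ext x * ext y)).
Proof.
move=> Sx Sy; have [ux uxB hx] := coordP Sx; have [uy uyB hy] := coordP Sy.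
have sS1 (s : seq F1) : (forall z, z \in s -> B1 z) -> forall z, z \in s -> S1 z.
  by move=> sB z /sB /(qbasis_sub q1).
have DB z : z \in symdiff (coord x) (coord y) -> B1 z by move/mem_symdiff/orP=> [/uxB|/uyB].
rewrite (@extE (x * y) (symdiff (coord x) (coord y))) //; last 3 first.
- exact: (subgroupM (elem_super E1)).
- exact: symdiff_uniq.
- exact: (quot_mul_symdiff E1 ux uy (sS1 _ uxB) (sS1 _ uyB) hx hy).
rewrite /ext (prod_symdiff g ux uy) invfM mulrCA mulfV; last first.
  exact/(elem_neq0 E2)/S2_gprod.
rewrite mulr1; apply/(subgroupV (elem_sub E2))/(elem_expr2 E2)/S2_gprod => z.
by rewrite mem_filter => /andP[_ /uxB].
Qed.

Let ext_ker x : S1 x -> H2 (ext x) <-> H1 x.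
Proof.
move=> Sx; have [ux uxB hx] := coordP Sx; case: bg => gB ginj _.
split=> [hgx|hx1].
  suff cx0 : coord x = [::] by move: hx; rewrite cx0 big_nil divr1.
  suff : map g (coord x) = [::] by case: (coord x).
  apply: (qbasis_indep q2); last by rewrite big_map.
    by rewrite map_inj_in_uniq // => y z /uxB By /uxB Bz; apply: ginj.
  by move=> _ /mapP[y /uxB /gB By ->].
rewrite (@extE x [::]) // ?big_nil; first exact: (subgroup1 (elem_sub E2)).
by rewrite divr1.
Qed.

Let ext_surj y : S2 y -> exists x, S1 x /\ H2 (y / ext x).
Proof.
move=> Sy; case: bg => gB ginj gsurj.
have [t [ut tB ht]] := qbasis_uniq_rep E2 q2 Sy.
have [u [uB tu]] : exists u, (forall x, x \in u -> B1 x) /\ t = map g u.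
  by apply: seq_in_img => z /tB /gsurj [w [Bw <-]]; exists w.
have Su : S1 (\prod_(z <- u) z) by apply: (elem_prod E1) => z /uB /(qbasis_sub q1).
exists (\prod_(z <- u) z); split=> //.
rewrite (@extE _ u) //; first by rewrite tu big_map in ht.
  by move: ut; rewrite tu => /map_uniq.
exact/(quot_refl (elem_sub E1))/(elem_neq0 E1).
Qed.

Lemma bij_on_quot_iso :
  exists phi, quot_iso S1 H1 S2 H2 phi /\ forall b, B1 b -> H2 (phi b / g b).
Proof.
exists ext; split; first split.
- by move=> x /coordP [_ uB _]; apply: S2_gprod.
- exact: ext_morph.
- exact: ext_ker.
- exact: ext_surj.
move=> b Bb; have Sb := qbasis_sub q1 Bb.
rewrite (@extE b [:: b]) // ?big_seq1.
- by apply/(quot_refl (elem_sub E2))/(elem_neq0 E2)/(qbasis_sub q2); case: bg => gB _ _; apply: gB.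
- by move=> y /[!inE] /eqP ->.
exact/(quot_refl (elem_sub E1))/(elem_neq0 E1).
Qed.

End LinearExtension.

(** * Equipotence *)

Definition equipotent (A B : Type) := exists f : A -> B, bijective f.

Lemma equipotent_of_inj_surj (A B : Type) (h : A -> B) :
  injective h -> (forall y, exists x, h x = y) -> equipotent A B.
Proof.
move=> hi hs; pose g y := proj1_sig (boolp.cid (hs y)).
have hg : cancel g h by move=> y; rewrite /g; case: boolp.cid.
by exists h, g => // x; apply: hi; rewrite hg.
Qed.

Lemma equipotent_refl A : equipotent A A. Proof. by exists id, id. Qed.

Lemma equipotent_sym A B : equipotent A B -> equipotent B A.
Proof. by move=> [f [g fg gf]]; exists g, f. Qed.

Lemma equipotent_trans A B C : equipotent A B -> equipotent B C -> equipotent A C.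
Proof. by move=> [f bf] [g bg]; exists (g \o f); apply: bij_comp. Qed.

Lemma equipotent_sum A A' B B' :
  equipotent A A' -> equipotent B B' -> equipotent (A + B) (A' + B').
Proof.
move=> [f [f' ff' f'f]] [g [g' gg' g'g]].
exists (fun s => match s with inl a => inl (f a) | inr b => inr (g b) end).
exists (fun s => match s with inl a => inl (f' a) | inr b => inr (g' b) end).
  by case=> [a|b]; rewrite ?ff' ?gg'.
by case=> [a|b]; rewrite ?f'f ?g'g.
Qed.

Lemma equipotent_sumC A B : equipotent (A + B) (B + A).
Proof.
exists (fun s => match s with inl a => inr a | inr b => inl b end).
by exists (fun s => match s with inl a => inr a | inr b => inl b end); case.
Qed.

Lemma equipotent_sumA A B C : equipotent ((A + B) + C) (A + (B + C)).
Proof.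
exists (fun s => match s with inl (inl a) => inl a | inl (inr b) => inr (inl b)
                           | inr c => inr (inr c) end).
exists (fun s => match s with inl a => inl (inl a) | inr (inl b) => inl (inr b)
                           | inr (inr c) => inr c end).
  by case=> [[]|].
by case=> [|[]].
Qed.

Lemma equipotent_ord0 A : equipotent ('I_0 + A) A.
Proof.
exists (fun s : 'I_0 + A =>
  match s with inl i => False_rect A (notF (ltn_ord i)) | inr a => a end).
exists inr => //; by case=> [[m lt]|a] //; rewrite ltn0 in lt.
Qed.

Lemma equipotent_ordS n A : equipotent ('I_n.+1 + A) ('I_1 + ('I_n + A)).
Proof.
pose h (s : 'I_1 + ('I_n + A)) : 'I_n.+1 + A :=
  match s with inl _ => inl ord0 | inr (inl j) => inl (lift ord0 j) | inr (inr a) => inr a end.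
apply: equipotent_sym; apply: (@equipotent_of_inj_surj _ _ h).
  case=> [i|[i|x]] [j|[j|y]] //=; rewrite ?(ord1 i) ?(ord1 j) //.
  - by move=> [e]; congr (inr (inl _)); apply: val_inj; move: e; rewrite !add0n.
  - by case=> ->.
case=> [i|x]; last by exists (inr (inr x)).
by case: (unliftP ord0 i) => [j ->|->]; [exists (inr (inl j)) | exists (inl ord0)].
Qed.

(* Hilbert's hotel: the image of [a] is [f (inr a)], unless that is the point
   [inl ord0], in which case it is the image [f (inl ord0)] of the extra point. *)
Lemma equipotent_cancel1 A B : equipotent ('I_1 + A) ('I_1 + B) -> equipotent A B.
Proof.
move=> [f [f' ff' f'f]].
pose R (X Y : Type) (k : 'I_1 + X -> 'I_1 + Y) a b :=
  k (inr a) = inr b \/ (k (inr a) = inl ord0 /\ k (inl ord0) = inr b).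
have R_total X Y (k : 'I_1 + X -> 'I_1 + Y) : injective k -> forall a, exists b, R X Y k a b.
  move=> ki a; case e: (k (inr a)) => [i|b]; last by exists b; left.
  case e2: (k (inl ord0)) => [j|b]; last by exists b; right; rewrite e (ord1 i).
  by rewrite (ord1 j) -(ord1 i) -e in e2; have := ki _ _ e2.
have R_fun X Y (k : 'I_1 + X -> 'I_1 + Y) a b1 b2 : R X Y k a b1 -> R X Y k a b2 -> b1 = b2.
  by move=> [e1|[e1 e1']] [e2|[e2 e2']]; congruence.
have R_inv a b : R A B f a b <-> R B A f' b a.
  split=> [[e|[e e']]|[e|[e e']]].
  - by left; rewrite -e ff'.
  - by right; split; [rewrite -e' ff' | rewrite -e ff'].
  - by left; rewrite -e f'f.
  - by right; split; [rewrite -e' f'f | rewrite -e f'f].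
pose g a := proj1_sig (boolp.cid (R_total _ _ f (can_inj ff') a)).
have gP a : R A B f a (g a) by rewrite /g; case: boolp.cid.
apply: (@equipotent_of_inj_surj _ _ g).
  move=> a1 a2 e; have /R_inv h1 := gP a1; have /R_inv h2 := gP a2.
  by rewrite e in h1; apply: R_fun h1 h2.
move=> b; have [a /R_inv Rab] := R_total _ _ f' (can_inj f'f) b.
by exists a; apply: R_fun (gP a) Rab.
Qed.

Lemma equipotent_cancel n A B : equipotent ('I_n + A) ('I_n + B) -> equipotent A B.
Proof.
elim: n => [|n IH] h.
  exact: equipotent_trans (equipotent_sym (equipotent_ord0 A))
                          (equipotent_trans h (equipotent_ord0 B)).
apply/IH/equipotent_cancel1.
exact: equipotent_trans (equipotent_sym (equipotent_ordS n A))
                        (equipotent_trans h (equipotent_ordS n B)).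
Qed.

Lemma equipotent_bij_on (A1 A2 : Type) (P1 : A1 -> Prop) (P2 : A2 -> Prop) g :
  bij_on P1 P2 g -> equipotent {x | P1 x} {y | P2 y}.
Proof.
move=> [gP gi gs].
apply: (@equipotent_of_inj_surj _ _ (fun x => exist P2 (g (sval x)) (gP _ (svalP x)))).
  by move=> [x px] [y py] [/(gi _ _ px py) e]; apply: boolp.eq_exist.
move=> [y py]; have [x [px e]] := gs y py.
by exists (exist _ x px); apply: boolp.eq_exist.
Qed.

Lemma bij_on_equipotent (A1 A2 : Type) (a2 : A2) (P1 : A1 -> Prop) (P2 : A2 -> Prop) :
  equipotent {x | P1 x} {y | P2 y} -> exists g, bij_on P1 P2 g.
Proof.
move=> [f [f' ff' f'f]].
pose g x := if excluded_middle_informative (P1 x) is left p then sval (f (exist _ x p)) else a2.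
have gE x (p : P1 x) : g x = sval (f (exist _ x p)).
  rewrite /g; case: excluded_middle_informative => // p'.
  by rewrite (boolp.Prop_irrelevance p p').
exists g; split.
- by move=> x p; rewrite (gE x p); apply: svalP.
- move=> x y px py; rewrite (gE x px) (gE y py) => e.
  have e' : f (exist _ x px) = f (exist _ y py).
    by move: e; case: (f _) => u pu; case: (f _) => v pv /= uv; apply: boolp.eq_exist.
  by have := f_equal f' e'; rewrite !ff' => -[].
move=> y py; exists (sval (f' (exist _ y py))); split; first exact: svalP.
have sigE (u : {x | P1 x}) : exist _ (sval u) (svalP u) = u.
  by case: u => x px; apply: boolp.eq_exist.
by rewrite (gE _ (svalP _)) sigE f'f.
Qed.

Lemma bij_on_img (A1 A2 : Type) (P : A1 -> Prop) (g : A1 -> A2) :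
  (forall x y, P x -> P y -> g x = g y -> x = y) -> bij_on P (img g P) g.
Proof. by move=> gi; split=> // [x px | y [x [px ->]]]; exists x. Qed.

Lemma bij_on_comp (A1 A2 A3 : Type) (P1 : A1 -> Prop) (P2 : A2 -> Prop)
    (P3 : A3 -> Prop) f g :
  bij_on P1 P2 f -> bij_on P2 P3 g -> bij_on P1 P3 (fun x => g (f x)).
Proof.
move=> [m1 i1 s1] [m2 i2 s2]; split.
- by move=> x /m1 /m2.
- by move=> x y px py /(i2 _ _ (m1 _ px) (m1 _ py)) /(i1 _ _ px py).
by move=> z /s2 [y [py <-]]; have [x [px <-]] := s1 y py; exists x.
Qed.

Lemma bij_on_inv (A1 A2 : Type) (a1 : A1) (P1 : A1 -> Prop) (P2 : A2 -> Prop) f :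
  bij_on P1 P2 f -> exists g, bij_on P2 P1 g /\ forall x, P1 x -> g (f x) = x.
Proof.
move=> [m1 i1 s1].
pose g y := epsilon (inhabits a1) (fun x => P1 x /\ f x = y).
have gP y : P2 y -> P1 (g y) /\ f (g y) = y.
  by move=> py; apply: (epsilon_spec (inhabits a1) (fun x => P1 x /\ f x = y)); apply: s1.
have gf x : P1 x -> g (f x) = x by move=> px; have [pg e] := gP _ (m1 _ px); apply: i1.
exists g; split=> //; split.
- by move=> y /gP [].
- by move=> y z /gP [_ e1] /gP [_ e2] e; rewrite -e1 -e2 e.
by move=> x px; exists (f x); split; [apply: m1 | apply: gf].
Qed.

Lemma bij_on_union (A1 A2 : Type) (P1 P2 : A1 -> Prop) (Q1 Q2 : A2 -> Prop) g1 g2 :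
  bij_on P1 Q1 g1 -> bij_on P2 Q2 g2 ->
  (forall x, P1 x -> ~ P2 x) -> (forall y, Q1 y -> ~ Q2 y) ->
  bij_on (fun x => P1 x \/ P2 x) (fun y => Q1 y \/ Q2 y)
         (fun x => if boolp.asbool (P1 x) then g1 x else g2 x).
Proof.
move=> [m1 i1 s1] [m2 i2 s2] dP dQ.
pose g x := if boolp.asbool (P1 x) then g1 x else g2 x.
suff : bij_on (fun x => P1 x \/ P2 x) (fun y => Q1 y \/ Q2 y) g by [].
have gE1 x : P1 x -> g x = g1 x by move=> p; rewrite /g (boolp.asboolT p).
have gE2 x : P2 x -> g x = g2 x by move=> p; rewrite /g (boolp.asboolF (dP x ^~ p)).
split.
- by move=> x [p|p]; [rewrite gE1 //; left; apply: m1 | rewrite gE2 //; right; apply: m2].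
- move=> x y [px|px] [py|py]; rewrite ?(gE1 _ px) ?(gE2 _ px) ?(gE1 _ py) ?(gE2 _ py).
  + exact: i1.
  + by move=> e; case: (dQ _ (m1 _ px)); rewrite e; apply: m2.
  + by move=> e; case: (dQ _ (m1 _ py)); rewrite -e; apply: m2.
  + exact: i2.
move=> y [/s1 [x [px <-]]|/s2 [x [px <-]]]; exists x.
  by split; [left | rewrite gE1].
by split; [right | rewrite gE2].
Qed.

Lemma equipotent_adjoin1 (A : Type) (P : A -> Prop) v : ~ P v ->
  equipotent ('I_1 + {x | P x}) {x | P x \/ x = v}.
Proof.
move=> nPv.
pose h (s : 'I_1 + {x | P x}) : {x | P x \/ x = v} :=
  match s with inl _ => exist _ v (or_intror erefl)
             | inr (exist x p) => exist _ x (or_introl p) end.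
apply: (@equipotent_of_inj_surj _ _ h).
  case=> [i|[x px]] [j|[y py]] //= e.
  - by rewrite (ord1 i) (ord1 j).
  - by case: e => e; case: nPv; rewrite e.
  - by case: e => e; case: nPv; rewrite -e.
  by case: e => e; congr inr; apply: boolp.eq_exist.
move=> [x [px|e]]; first by exists (inr (exist _ x px)); apply: boolp.eq_exist.
by exists (inl ord0); apply: boolp.eq_exist.
Qed.

Lemma equipotent_remove1 (A : eqType) (P : A -> Prop) b0 : P b0 ->
  equipotent {x | P x} ('I_1 + {x | P x /\ x != b0}).
Proof.
move=> Pb0; apply: equipotent_sym.
apply: equipotent_trans (equipotent_adjoin1 (v := b0) _) _; first by case; rewrite eqxx.
apply: (@equipotent_bij_on _ _ _ _ id); split=> // [x [[] //|->] | y Py] //.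
by exists y; split=> //; case: (eqVneq y b0) => [->|]; [right | left].
Qed.

Lemma equipotent_sumCA A B C : equipotent (A + (B + C)) (B + (A + C)).
Proof.
apply: equipotent_trans (equipotent_sym (equipotent_sumA _ _ _)) _.
apply: equipotent_trans (equipotent_sum (equipotent_sumC _ _) (equipotent_refl _)) _.
exact: equipotent_sumA.
Qed.

Lemma equipotent_ord_add m n A : equipotent ('I_(m + n) + A) ('I_m + ('I_n + A)).
Proof.
elim: m => [|m IH]; first exact: equipotent_sym (equipotent_ord0 _).
apply: equipotent_trans (equipotent_ordS _ _) _.
apply: equipotent_trans (equipotent_sum (equipotent_refl _) IH) _.
exact: equipotent_sym (equipotent_ordS _ _).
Qed.

Lemma equipotent_shift_trans n1 m1 n2 m2 A B C :
  equipotent ('I_n1 + A) ('I_m1 + B) -> equipotent ('I_n2 + B) ('I_m2 + C) ->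
  equipotent ('I_(n1 + n2) + A) ('I_(m1 + m2) + C).
Proof.
move=> hAB hBC.
apply: equipotent_trans (equipotent_ord_add _ _ _) _.
apply: equipotent_trans (equipotent_sumCA _ _ _) _.
apply: equipotent_trans (equipotent_sum (equipotent_refl _) hAB) _.
apply: equipotent_trans (equipotent_sumCA _ _ _) _.
apply: equipotent_trans (equipotent_sum (equipotent_refl _) hBC) _.
exact: equipotent_sym (equipotent_ord_add _ _ _).
Qed.

Lemma equipotent_shift_cancel n m k A B :
  equipotent ('I_(n + k) + A) ('I_(m + k) + B) -> equipotent ('I_n + A) ('I_m + B).
Proof.
move=> h; apply: (@equipotent_cancel k).
apply: equipotent_trans (equipotent_sumCA _ _ _) _.
apply: equipotent_trans (equipotent_sym (equipotent_ord_add _ _ _)) _.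
apply: equipotent_trans h _.
apply: equipotent_trans (equipotent_ord_add _ _ _) _.
exact: equipotent_sumCA.
Qed.

(** * Dimension relations *)

(* [dim (S1 / H1) + n1 = dim (S2 / H2) + n2], witnessed from every basis of
   either side; [dim_plus_eq] only asks for one pair of bases. *)
Definition dim_eq (F1 F2 : fieldType) (n1 : nat) (S1 H1 : F1 -> Prop)
    (n2 : nat) (S2 H2 : F2 -> Prop) :=
  (forall B1, qbasis S1 H1 B1 -> exists2 B2, qbasis S2 H2 B2 &
     equipotent ('I_n1 + {x | B1 x}) ('I_n2 + {x | B2 x})) /\
  (forall B2, qbasis S2 H2 B2 -> exists2 B1, qbasis S1 H1 B1 &
     equipotent ('I_n1 + {x | B1 x}) ('I_n2 + {x | B2 x})).

Section DimEq.
Variables (F1 F2 F3 : fieldType) (S1 H1 : F1 -> Prop) (S2 H2 : F2 -> Prop)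
  (S3 H3 : F3 -> Prop).

Lemma dim_eq_refl n : dim_eq n S1 H1 n S1 H1.
Proof. by split=> B qB; exists B => //; apply: equipotent_refl. Qed.

Lemma dim_eq_sym n1 n2 : dim_eq n1 S1 H1 n2 S2 H2 -> dim_eq n2 S2 H2 n1 S1 H1.
Proof.
case=> h1 h2; split=> B qB.
  by have [B' qB' e] := h2 B qB; exists B' => //; apply: equipotent_sym.
by have [B' qB' e] := h1 B qB; exists B' => //; apply: equipotent_sym.
Qed.

Lemma dim_eq_trans n1 m1 n2 m2 :
  dim_eq n1 S1 H1 m1 S2 H2 -> dim_eq n2 S2 H2 m2 S3 H3 ->
  dim_eq (n1 + n2) S1 H1 (m1 + m2) S3 H3.
Proof.
move=> [h12 h21] [h23 h32]; split.
  move=> B1 /h12 [B2 /h23 [B3 qB3 e23] e12].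
  by exists B3 => //; apply: equipotent_shift_trans e12 e23.
move=> B3 /h32 [B2 /h21 [B1 qB1 e12] e23].
by exists B1 => //; apply: equipotent_shift_trans e12 e23.
Qed.

Lemma dim_plus_eq_trans n1 m1 n2 m2 :
  dim_plus_eq n1 S1 H1 m1 S2 H2 -> dim_eq n2 S2 H2 m2 S3 H3 ->
  dim_plus_eq (n1 + n2) S1 H1 (m1 + m2) S3 H3.
Proof.
move=> [B1 [B2 [qB1 [qB2 e12]]]] [h23 _]; have [B3 qB3 e23] := h23 B2 qB2.
by exists B1, B3; do 2 split=> //; apply: equipotent_shift_trans e12 e23.
Qed.

Lemma dim_plus_eq_transl n1 m1 n2 m2 :
  dim_eq n1 S1 H1 m1 S2 H2 -> dim_plus_eq n2 S2 H2 m2 S3 H3 ->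
  dim_plus_eq (n1 + n2) S1 H1 (m1 + m2) S3 H3.
Proof.
move=> [_ h21] [B2 [B3 [qB2 [qB3 e23]]]]; have [B1 qB1 e12] := h21 B2 qB2.
by exists B1, B3; do 2 split=> //; apply: equipotent_shift_trans e12 e23.
Qed.

Lemma dim_plus_eq_cancel n m k :
  dim_plus_eq (n + k) S1 H1 (m + k) S2 H2 -> dim_plus_eq n S1 H1 m S2 H2.
Proof.
move=> [B1 [B2 [qB1 [qB2 e]]]].
by exists B1, B2; do 2 split=> //; apply: equipotent_shift_cancel e.
Qed.

Lemma dim_plus_eq_of_dim_eq n m : elementary2 S1 H1 ->
  dim_eq n S1 H1 m S2 H2 -> dim_plus_eq n S1 H1 m S2 H2.
Proof.
move=> E [h _]; have [B1 qB1] := qbasis_exists E; have [B2 qB2 e] := h B1 qB1.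
by exists B1, B2.
Qed.

Lemma dim_eq_quot_iso f : elementary2 S1 H1 -> elementary2 S2 H2 ->
  quot_iso S1 H1 S2 H2 f -> dim_eq 0 S1 H1 0 S2 H2.
Proof.
move=> E1 E2 qf; split=> [B1 qB1 | B2 qB2].
  have [qB2 inj] := quot_iso_qbasis E1 E2 qf qB1.
  exists (img f B1) => //.
  by apply/(@equipotent_sum _ _ _ _ (equipotent_refl _))/equipotent_bij_on/bij_on_img.
have [g [qB1 ginj _]] := quot_iso_qbasis_pre E1 E2 qf qB2.
exists (img g B2) => //; apply: equipotent_sym.
by apply/(@equipotent_sum _ _ _ _ (equipotent_refl _))/equipotent_bij_on/bij_on_img.
Qed.

End DimEq.

Lemma dim_eq_adjoin (F : fieldType) (S H : F -> Prop) v :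
  elementary2 S H -> S v -> ~ H v -> dim_eq 0 S H 1 S (adjoin H v).
Proof.
move=> E Sv nHv; split=> [B qB | B' qB'].
  have [b0 [Bb0 qB']] := qbasis_exchange E qB Sv nHv.
  exists (fun x => B x /\ x != b0) => //.
  exact: equipotent_trans (equipotent_ord0 _) (equipotent_remove1 Bb0).
have [qB nB'v] := qbasis_adjoin E qB' Sv nHv.
exists (fun x => B' x \/ x = v) => //.
exact: equipotent_trans (equipotent_ord0 _) (equipotent_sym (equipotent_adjoin1 nB'v)).
Qed.

Lemma quot_iso_sub (F1 F2 : fieldType) (S H S1 : F1 -> Prop) (S' H' S1' : F2 -> Prop) f :
  elementary2 S H -> elementary2 S' H' -> elementary2 S1 H -> elementary2 S1' H' ->
  (forall x, S1 x -> S x) -> quot_iso S H S' H' f ->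
  (forall x, S1 x -> S1' (f x)) -> (forall y, S1' y -> exists x, S1 x /\ H' (y / f x)) ->
  quot_iso S1 H S1' H' f /\ quot_iso S S1 S' S1' f.
Proof.
move=> E E' E1 E1' S1S qf fS1 fS1'; have H'S1' := elem_le E1'.
split; first split=> //.
- by move=> x y /S1S Sx /S1S Sy; apply: (quot_iso_morph qf).
- by move=> x /S1S Sx; apply: (quot_iso_ker qf).
split.
- exact: (quot_iso_mem qf).
- by move=> x y Sx Sy; apply/H'S1'/(quot_iso_morph qf).
- move=> x Sx; split=> [/fS1' [x1 [S1x1 hx]] | /fS1 //].
  have /(quot_isoE E E' qf Sx (S1S _ S1x1)) hxx1 := hx.
  by have := subgroupM (elem_super E1) (elem_le E1 hxx1) S1x1; rewrite divfK ?(elem_neq0 E1).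
- by move=> y /(quot_iso_surj qf) [x [Sx /H'S1' h]]; exists x.
Qed.

(** * Square classes of a field with an automorphism *)

Lemma elementary2_squares (L : fieldType) (S H : L -> Prop) :
  is_subgroup S -> is_subgroup H -> (forall x, H x -> S x) ->
  (forall x, squares_of x -> H x) -> elementary2 S H.
Proof.
move=> sS sH HS sqH; split=> // x Sx.
by apply/sqH/squares_sqr; apply: (subgroup_neq0 sS).
Qed.

Lemma elementary2_units (L : fieldType) : elementary2 (@units_of L) (@squares_of L).
Proof.
apply: elementary2_squares; [exact: subgroup_units | exact: subgroup_squares | |] => //.
exact: (subgroup_neq0 (@subgroup_squares L)).
Qed.

Section SquareClasses.
Variables (L : fieldType) (s : {rmorphism L -> L}).

Definition normK x := x * s x.

(* [x] represents a square class fixed by [s]. *)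
Definition fixedT x := x != 0 /\ squares_of (s x / x).

Lemma normKM x y : normK (x * y) = normK x * normK y.
Proof. by rewrite /normK rmorphM mulrACA. Qed.

Lemma normK_neq0 x : x != 0 -> normK x != 0.
Proof. by move=> x0; rewrite /normK mulf_neq0 // fmorph_eq0. Qed.

Lemma squares_morph x : squares_of x -> squares_of (s x).
Proof. by move=> [y [y0 ->]]; exists (s y); rewrite rmorphXn fmorph_eq0. Qed.

Lemma squares_morph_div x y : squares_of (x / y) -> squares_of (s x / s y).
Proof. by rewrite -fmorph_div; apply: squares_morph. Qed.

Lemma squares_normK_div x y : squares_of (x / y) -> squares_of (normK x / normK y).
Proof.
move=> h; have := subgroupM (@subgroup_squares L) h (squares_morph_div h).
by rewrite /normK invfM mulrACA.
Qed.

Lemma subgroup_fixedT : is_subgroup fixedT.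
Proof.
have sq := @subgroup_squares L.
split.
- by split; rewrite ?oner_neq0 // rmorph1 divr1; apply: (subgroup1 sq).
- move=> x y [x0 hx] [y0 hy]; split; first by rewrite mulf_neq0.
  by rewrite rmorphM invfM mulrACA; apply: (subgroupM sq).
- move=> x [x0 hx]; split; first by rewrite invr_eq0.
  by rewrite fmorphV invrK mulrC -invf_div; apply: (subgroupV sq).
by move=> x [].
Qed.

Lemma squares_normK_conj y w :
  squares_of (y / normK w) -> squares_of (s w / (y * w)).
Proof.
move=> h; have /andP[y0 /[!mulf_eq0] /norP[w0 sw0]] := quot_neq0 (@subgroup_squares L) h.
suff -> : s w / (y * w) = (y / normK w)^-1 * (w^-1 * w^-1).
  apply: (subgroupM (@subgroup_squares L)); first exact: (subgroupV (@subgroup_squares L)).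
  by apply: squares_sqr; rewrite invr_eq0.
by rewrite /normK; field; rewrite w0 sw0 y0.
Qed.

End SquareClasses.

Lemma quot_rmorphM (F K : fieldType) (f : {rmorphism F -> K}) (H : K -> Prop) c d :
  is_subgroup H -> c != 0 -> d != 0 -> H (f (c * d) / (f c * f d)).
Proof.
by move=> sH c0 d0; rewrite rmorphM divff ?mulf_neq0 ?fmorph_eq0 //; apply: (subgroup1 sH).
Qed.

(** * The quadratic extension [K = F(sqrt a)] *)

Definition quad_setting (F K : fieldType) (i : {rmorphism F -> K}) (a : F) (r : K)
    (s : {rmorphism K -> K}) :=
  [/\ (2%:R : F) != 0, a != 0, ~ squares_of a, is_quad_ext i a r & is_gal_generator i s].

Section QuadExt.
Variables (F K : fieldType) (i : {rmorphism F -> K}) (a : F) (r : K)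
  (s : {rmorphism K -> K}).
Hypothesis Q : quad_setting i a r s.

Local Notation N := (norms_of i s).

(* The square classes of [K] coming from the norm group, resp. from [F]. *)
Definition normT (x : K) := exists c, N c /\ squares_of (x / i c).
Definition baseT (x : K) := exists c, c != 0 /\ squares_of (x / i c).

Let char2 : (2%:R : F) != 0. Proof. by case: Q. Qed.
Let a_neq0 : a != 0. Proof. by case: Q. Qed.
Let a_nsq : ~ squares_of a. Proof. by case: Q. Qed.
Let r_sqr : r ^+ 2 = i a. Proof. by case: Q => _ _ _ []. Qed.
Let decomp x : exists u v, x = i u + i v * r. Proof. by case: Q => _ _ _ []. Qed.
Let s_base c : s (i c) = i c. Proof. by case: Q => _ _ _ _ [_ []]. Qed.
Let s_nontriv : exists x, s x != x. Proof. by case: Q => _ _ _ _ [_ []]. Qed.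
Let i_eq0 c : (i c == 0) = (c == 0). Proof. exact: fmorph_eq0. Qed.
Let s_eq0 x : (s x == 0) = (x == 0). Proof. exact: fmorph_eq0. Qed.

Lemma quad_r_neq0 : r != 0.
Proof.
apply: contra_neq a_neq0 => r0.
by apply/eqP; rewrite -i_eq0 -r_sqr r0 expr0n.
Qed.

(* [1, r] is a basis of [K] over [F], because [a] is not a square. *)
Lemma quad_coord0 p q : i p + i q * r = 0 -> p = 0 /\ q = 0.
Proof.
move=> e; have [q0|q0] := eqVneq q 0.
  by move: e; rewrite q0 rmorph0 mul0r addr0 => /eqP; rewrite i_eq0 => /eqP.
case: a_nsq; exists (- p / q).
have e2 : i q * r = - i p by apply/eqP; rewrite -addr_eq0 addrC e.
have er : r = i (- p / q).
  by rewrite fmorph_div rmorphN -e2 [i q * r]mulrC mulfK ?i_eq0.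
split; first by rewrite -i_eq0 -er quad_r_neq0.
by apply: (fmorph_inj i); rewrite -r_sqr er rmorphXn.
Qed.

Lemma quad_s_r : s r = - r.
Proof.
have /eqP : (s r - r) * (s r + r) = 0.
  by rewrite -subr_sqr -rmorphXn r_sqr s_base subrr.
rewrite mulf_eq0 => /orP[/eqP/subr0_eq sr|/eqP].
  case: s_nontriv => x; have [u [v ->]] := decomp x.
  by rewrite rmorphD rmorphM !s_base sr eqxx.
by move/(canRL (addrK r)); rewrite add0r.
Qed.

Lemma quad_s_decomp u v : s (i u + i v * r) = i u - i v * r.
Proof. by rewrite rmorphD rmorphM !s_base quad_s_r mulrN. Qed.

Lemma quad_sK x : s (s x) = x.
Proof.
have [u [v ->]] := decomp x.
by rewrite quad_s_decomp rmorphB rmorphM !s_base quad_s_r mulrN opprK.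
Qed.

Lemma quad_fixed_base x : s x = x -> exists c, x = i c.
Proof.
have [u [v ->]] := decomp x; rewrite quad_s_decomp => e.
suff v0 : v = 0 by exists u; rewrite v0 rmorph0 mul0r addr0.
have : i 0 + i (2%:R * v) * r = 0.
  have <- : (i u + i v * r) - (i u - i v * r) = 0 by rewrite -e subrr.
  by rewrite rmorph0 add0r rmorphM rmorph_nat; ring.
by case/quad_coord0 => _ /eqP; rewrite mulf_eq0 (negbTE char2) => /eqP.
Qed.

Lemma quad_normK_base x : exists c, normK s x = i c.
Proof. by apply: quad_fixed_base; rewrite /normK rmorphM quad_sK mulrC. Qed.

Lemma quad_base_squares c : c != 0 ->
  squares_of (i c) <-> squares_of c \/ squares_of (c * a).
Proof.
move=> c0; split; last first.
  case=> [[u [u0 ->]]|[u [u0 e]]]; first by exists (i u); rewrite rmorphXn i_eq0.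
  exists (i u / r); split; first by rewrite mulf_neq0 ?invr_eq0 ?i_eq0 ?quad_r_neq0.
  have -> : c = u ^+ 2 / a by rewrite -e mulfK.
  by rewrite fmorph_div rmorphXn -r_sqr expr_div_n.
move=> [y [y0 e]]; have [u [v ey]] := decomp y.
have : i (c - (u ^+ 2 + a * v ^+ 2)) + i (- (2%:R * u * v)) * r = 0.
  by rewrite !rmorphB !rmorphD !rmorphN !rmorphM !rmorph_nat e ey -r_sqr; ring.
case/quad_coord0 => /eqP; rewrite subr_eq0 => /eqP ->.
move/eqP; rewrite oppr_eq0 -mulrA mulf_eq0 (negbTE char2) mulf_eq0 /=.
case/orP=> /eqP z.
  right; exists (a * v); split; last by rewrite z; ring.
  rewrite mulf_neq0 //; apply: contra_neq y0 => v0.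
  by rewrite ey z v0 !rmorph0 mul0r addr0.
left; exists u; split; last by rewrite z; ring.
by apply: contra_neq y0 => u0; rewrite ey z u0 !rmorph0 mul0r addr0.
Qed.

Lemma quad_hilbert90 y : normK s y = 1 -> exists x, x != 0 /\ y = s x / x.
Proof.
rewrite /normK => e; have [->|yN1] := eqVneq y (-1).
  by exists r; rewrite quad_r_neq0 quad_s_r mulNr divff ?quad_r_neq0.
have sy0 : 1 + s y != 0.
  apply: contra_neq yN1 => /(canRL (addKr 1)) /(congr1 s).
  by rewrite quad_sK addr0 rmorphN rmorph1.
exists (1 + s y); split=> //.
by apply: (mulIf sy0); rewrite divfK // rmorphD rmorph1 quad_sK mulrDr mulr1 e addrC.
Qed.

Lemma norms_neq0 c : N c -> c != 0.
Proof. by move=> [x [x0 e]]; rewrite -i_eq0 e mulf_neq0 // s_eq0. Qed.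

Lemma squares_norms c : squares_of c -> N c.
Proof. by move=> [y [y0 ->]]; exists (i y); rewrite i_eq0 rmorphXn s_base expr2. Qed.

Lemma subgroup_norms : is_subgroup N.
Proof.
split; last exact: norms_neq0.
- by apply: squares_norms; exists 1; rewrite oner_neq0 expr1n.
- move=> c d [x [x0 ex]] [y [y0 ey]]; exists (x * y).
  by rewrite mulf_neq0 // rmorphM ex ey rmorphM mulrACA.
- move=> c [x [x0 ex]]; exists x^-1.
  by rewrite invr_eq0 fmorphV ex fmorphV invfM.
Qed.

Lemma norms_a : N a <-> N (-1).
Proof.
have Na : N (- a).
  exists r; split; first exact: quad_r_neq0.
  by rewrite quad_s_r mulrN -expr2 r_sqr rmorphN.
split=> h.
  by have := subgroupD subgroup_norms Na h; rewrite mulNr divff.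
by have := subgroupM subgroup_norms Na h; rewrite mulrN1 opprK.
Qed.

Lemma Upsilon_norm1 : N (-1) -> Upsilon i s = 1%N.
Proof. by rewrite /Upsilon; case: excluded_middle_informative. Qed.

Lemma Upsilon_nnorm1 : ~ N (-1) -> Upsilon i s = 0%N.
Proof. by rewrite /Upsilon; case: excluded_middle_informative. Qed.

Lemma squares_normT x : squares_of x -> normT x.
Proof.
by move=> h; exists 1; rewrite rmorph1 divr1; split=> //; apply: (subgroup1 subgroup_norms).
Qed.

Lemma subgroup_normT : is_subgroup normT.
Proof.
have sq := @subgroup_squares K; have sN := subgroup_norms.
split.
- by apply: squares_normT; apply: (subgroup1 sq).
- move=> x y [c [Nc hc]] [d [Nd hd]]; exists (c * d); split; first exact: (subgroupM sN).
  by rewrite rmorphM invfM mulrACA; apply: (subgroupM sq).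
- move=> x [c [Nc hc]]; exists c^-1; split; first exact: (subgroupV sN).
  by rewrite fmorphV -invfM; apply: (subgroupV sq).
- by move=> x [c [_ /(subgroup_neq0 sq)]]; rewrite mulf_eq0 negb_or => /andP[].
Qed.

Lemma base_fixedT c : c != 0 -> fixedT s (i c).
Proof.
move=> c0; split; first by rewrite i_eq0.
by rewrite s_base divff ?i_eq0 //; apply: (subgroup1 (@subgroup_squares K)).
Qed.

Lemma baseT_fixedT x : baseT x -> fixedT s x.
Proof.
move=> [c [c0 [z [z0 e]]]].
have ex : x = i c * z ^+ 2 by rewrite -e mulrC divfK ?i_eq0.
split; first by rewrite ex mulf_neq0 ?i_eq0 ?expf_neq0.
exists (s z / z); split; first by rewrite mulf_neq0 ?invr_eq0 ?s_eq0.
by rewrite ex rmorphM s_base rmorphXn; field; rewrite i_eq0 c0 z0.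
Qed.

Lemma normT_baseT x : normT x -> baseT x.
Proof. by move=> [c [Nc h]]; exists c; rewrite norms_neq0. Qed.

Lemma normT_fixedT x : normT x -> fixedT s x.
Proof. by move/normT_baseT/baseT_fixedT. Qed.

Lemma elementary2_units_norms : elementary2 (@units_of F) N.
Proof.
apply: elementary2_squares; rewrite /units_of.
- exact: subgroup_units.
- exact: subgroup_norms.
- exact: norms_neq0.
- exact: squares_norms.
Qed.

Lemma elementary2_norms_squares : elementary2 N (@squares_of F).
Proof.
apply: elementary2_squares; [exact: subgroup_norms | exact: subgroup_squares | |] => //.
exact: squares_norms.
Qed.

Lemma elementary2_units_fixedT : elementary2 (@units_of K) (fixedT s).
Proof.
apply: elementary2_squares; [exact: subgroup_units | exact: subgroup_fixedT | by move=> x [] |].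
by move=> x /squares_normT /normT_fixedT.
Qed.

Lemma elementary2_units_normT : elementary2 (@units_of K) normT.
Proof.
apply: elementary2_squares; [exact: subgroup_units | exact: subgroup_normT | | ].
  exact: (subgroup_neq0 subgroup_normT).
exact: squares_normT.
Qed.

Lemma elementary2_fixedT_normT : elementary2 (fixedT s) normT.
Proof.
apply: elementary2_squares; [exact: subgroup_fixedT | exact: subgroup_normT | |].
  exact: normT_fixedT.
exact: squares_normT.
Qed.

Lemma elementary2_normT_squares : elementary2 normT (@squares_of K).
Proof.
apply: elementary2_squares; [exact: subgroup_normT | exact: subgroup_squares | |].
  exact: squares_normT.
by [].
Qed.

Lemma elementary2_fixedT_squares : elementary2 (fixedT s) (@squares_of K).
Proof.
apply: elementary2_squares; [exact: subgroup_fixedT | exact: subgroup_squares | |] => //.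
by move=> x /squares_normT /normT_fixedT.
Qed.

Lemma normT_base c : c != 0 -> normT (i c) <-> N c \/ N (c * a).
Proof.
have sN := subgroup_norms; move=> c0; split.
  move=> [d [Nd]]; have d0 := norms_neq0 Nd.
  rewrite -fmorph_div => /quad_base_squares [|/squares_norms h|/squares_norms h].
  - by rewrite mulf_neq0 ?invr_eq0.
  - by left; have := subgroupM sN h Nd; rewrite divfK.
  - by right; have := subgroupM sN h Nd; rewrite mulrAC divfK.
case=> h.
  by exists c; split=> //; rewrite divff ?i_eq0 //; apply: (subgroup1 (@subgroup_squares K)).
exists (c * a); split=> //.
rewrite rmorphM invfM mulrA divff ?i_eq0 // mul1r -r_sqr.
by apply: (subgroupV (@subgroup_squares K)); exists r; rewrite quad_r_neq0.
Qed.

Lemma baseT_mul x c : c != 0 -> baseT (i c * x) -> baseT x.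
Proof.
move=> c0 [d [d0 h]]; exists (d / c); split; first by rewrite mulf_neq0 ?invr_eq0.
rewrite fmorph_div; suff -> : x / (i d / i c) = i c * x / i d by [].
by field; rewrite !i_eq0 c0 d0.
Qed.

(* A class fixed by [s] is [s y / y = t^2], and then [normK t = +-1]; if
   [normK t = 1], Hilbert 90 shows that [y] comes from [F]. *)
Lemma baseT_of_normK1 y t : y != 0 -> s y / y = t ^+ 2 -> normK s t = 1 -> baseT y.
Proof.
move=> y0 e Nt; have [u [u0 eu]] := quad_hilbert90 Nt.
have su0 : s u != 0 by rewrite s_eq0.
have [c ec] : exists c, y / u ^+ 2 = i c.
  apply: quad_fixed_base.
  have esy : s y = y * t ^+ 2 by rewrite -e mulrC divfK.
  by rewrite fmorph_div rmorphXn esy eu; field; rewrite u0 su0.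
exists c; split; first by rewrite -i_eq0 -ec mulf_neq0 // invr_eq0 expf_neq0.
by rewrite -ec; exists u; split=> //; field; rewrite u0 y0.
Qed.

Lemma normK_sign y t : y != 0 -> s y / y = t ^+ 2 -> normK s t = 1 \/ normK s t = -1.
Proof.
move=> y0 e; have sy0 : s y != 0 by rewrite s_eq0.
have : normK s t ^+ 2 = 1.
  by rewrite expr2 -normKM -expr2 -e /normK fmorph_div quad_sK; field; rewrite y0 sy0.
by move/eqP; rewrite sqrf_eq1 => /orP[] /eqP; [left|right].
Qed.

Lemma fixedT_baseT : ~ N (-1) -> forall y, fixedT s y -> baseT y.
Proof.
move=> nN y [y0 [t [t0 e]]]; have [|Nt] := normK_sign y0 e.
  exact: baseT_of_normK1 e.
by case: nN; exists t; rewrite rmorphN1 -Nt.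
Qed.

Lemma quad_oner_neqN1 : (1 : K) != -1.
Proof. by rewrite -addr_eq0 -mulr2n -(rmorph_nat i) i_eq0. Qed.

Lemma normK_s_div u : u != 0 -> normK s (s u / u) = 1.
Proof.
move=> u0; have su0 : s u != 0 by rewrite s_eq0.
by rewrite /normK fmorph_div quad_sK; field; rewrite u0 su0.
Qed.

(* When [-1 = normK z], the class of [x0] with [s x0 / x0 = z^2] is fixed by
   [s] but does not come from [F], and it accounts for all the others. *)
Lemma fixedT_extra : N (-1) -> exists x0,
  [/\ fixedT s x0, ~ baseT x0 & forall y, fixedT s y -> baseT y \/ baseT (y * x0)].
Proof.
move=> [z [z0 ez]].
have Nz : normK s z = -1 by rewrite /normK -ez rmorphN1.
have Nz2 : normK s (z ^+ 2) = 1 by rewrite expr2 normKM Nz mulrNN mulr1.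
have [x0 [x00 ex0]] := quad_hilbert90 Nz2.
exists x0; split; first by split=> //; exists z; rewrite ex0.
  move=> [c [c0 [u [u0 eu]]]].
  have ex : x0 = i c * u ^+ 2 by rewrite -eu mulrC divfK ?i_eq0.
  have : (s u / u) ^+ 2 == z ^+ 2.
    by rewrite ex0 ex rmorphM s_base rmorphXn; apply/eqP; field; rewrite i_eq0 c0 u0.
  rewrite eqf_sqr => /orP[] /eqP ezu.
    by move: (normK_s_div u0); rewrite ezu Nz => /esym/eqP; rewrite (negbTE quad_oner_neqN1).
  move: (normK_s_div u0); rewrite ezu /normK rmorphN mulrNN -/(normK s z) Nz.
  by move/esym/eqP; rewrite (negbTE quad_oner_neqN1).
move=> y [y0 [t [t0 e]]]; have [Nt|Nt] := normK_sign y0 e.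
  by left; apply: baseT_of_normK1 e Nt.
right; apply: (@baseT_of_normK1 _ (t * z)); first by rewrite mulf_neq0.
  by rewrite rmorphM invfM mulrACA e -ex0 exprMn.
by rewrite normKM Nt Nz mulrNN mulr1.
Qed.

Lemma quot_iso_normK :
  quot_iso (@units_of K) (fixedT s) normT (@squares_of K) (normK s).
Proof.
have sq := @subgroup_squares K.
split.
- move=> x x0; have [c ec] := quad_normK_base x; exists c; split.
    by exists x; rewrite -ec.
  by rewrite ec divff -?ec ?normK_neq0 //; apply: (subgroup1 sq).
- move=> x y x0 y0; rewrite normKM divff; first exact: (subgroup1 sq).
  by rewrite mulf_neq0 // normK_neq0.
- move=> x x0; have -> : normK s x = (x * x) * (s x / x) by rewrite /normK; field.
  split=> [h|[_ h]]; last by apply: (subgroupM sq) => //; apply: squares_sqr.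
  split=> //; have := subgroupD sq h (squares_sqr x0).
  by rewrite mulrC mulKf // mulf_neq0.
- by move=> y [c [[w [w0 ew]] h]]; exists w; rewrite /normK -ew.
Qed.

Lemma quot_iso_norms :
  ~ N (-1) -> quot_iso N (@squares_of F) normT (@squares_of K) i.
Proof.
move=> nN; split.
- move=> c Nc; exists c; split=> //.
  by rewrite divff ?i_eq0 ?norms_neq0 //; apply: (subgroup1 (@subgroup_squares K)).
- move=> c d /norms_neq0 c0 /norms_neq0 d0.
  exact: (quot_rmorphM _ (@subgroup_squares K)).
- move=> c Nc; rewrite (quad_base_squares (norms_neq0 Nc)); split; last by left.
  case=> // /squares_norms h; case: nN; apply/norms_a.
  by have := subgroupD subgroup_norms h Nc; rewrite mulrC mulKf ?norms_neq0.
- by move=> y [c [Nc h]]; exists c.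
Qed.

Lemma quot_iso_norms_adjoin :
  N (-1) -> quot_iso N (adjoin (@squares_of F) a) normT (@squares_of K) i.
Proof.
move=> hN; split.
- move=> c Nc; exists c; split=> //.
  by rewrite divff ?i_eq0 ?norms_neq0 //; apply: (subgroup1 (@subgroup_squares K)).
- move=> c d /norms_neq0 c0 /norms_neq0 d0.
  exact: (quot_rmorphM _ (@subgroup_squares K)).
- by move=> c Nc; rewrite (quad_base_squares (norms_neq0 Nc)).
- by move=> y [c [Nc h]]; exists c.
Qed.

Lemma quot_iso_units_adjoin :
  ~ N (-1) -> quot_iso (@units_of F) (adjoin N a) (fixedT s) normT i.
Proof.
move=> nN; split.
- exact: base_fixedT.
- by move=> c d c0 d0; apply: (quot_rmorphM _ subgroup_normT).
- by move=> c c0; rewrite (normT_base c0).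
- move=> y /(fixedT_baseT nN) [c [c0 h]]; exists c; split=> //.
  exact: squares_normT.
Qed.

Lemma quot_iso_units x0 : N (-1) -> fixedT s x0 -> ~ baseT x0 ->
  (forall y, fixedT s y -> baseT y \/ baseT (y * x0)) ->
  quot_iso (@units_of F) N (fixedT s) (adjoin normT x0) i.
Proof.
move=> hN Fx0 nBx0 dec; split.
- exact: base_fixedT.
- by move=> c d c0 d0; left; apply: (quot_rmorphM _ subgroup_normT).
- move=> c c0; split; last by move=> Nc; left; apply/(normT_base c0); left.
  case=> [/(normT_base c0) [//|h]|/normT_baseT h].
    by have := subgroupD subgroup_norms h (proj2 norms_a hN); rewrite mulfK.
  by case: nBx0; apply: (baseT_mul c0).
- move=> y /dec [[c [c0 h]]|[c [c0 h]]]; exists c; split=> //.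
    by left; apply: squares_normT.
  by right; apply: squares_normT; rewrite mulrAC.
Qed.

Lemma dim_eq_norms : dim_eq 0 N (@squares_of F) (Upsilon i s) normT (@squares_of K).
Proof.
have E := elementary2_norms_squares; have E' := elementary2_normT_squares.
have [hN|hN] := boolp.pselect (N (-1)); last first.
  by rewrite Upsilon_nnorm1 //; apply: dim_eq_quot_iso E E' (quot_iso_norms hN).
have Na := proj2 norms_a hN.
have Ea := elementary2_adjoin E Na.
have := dim_eq_trans (dim_eq_adjoin E Na a_nsq)
  (dim_eq_quot_iso Ea E' (quot_iso_norms_adjoin hN)).
by rewrite Upsilon_norm1.
Qed.

Lemma dim_eq_units : dim_eq (2 * Upsilon i s) (@units_of F) N 1 (fixedT s) normT.
Proof.
have E := elementary2_units_norms; have E' := elementary2_fixedT_normT.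
have [hN|hN] := boolp.pselect (N (-1)).
  have [x0 [Fx0 nBx0 dec]] := fixedT_extra hN.
  have nNx0 : ~ normT x0 by move/normT_baseT.
  have Ex0 := elementary2_adjoin E' Fx0.
  have := dim_eq_trans (dim_eq_trans (dim_eq_quot_iso E Ex0 (quot_iso_units hN Fx0 nBx0 dec))
    (dim_eq_sym (dim_eq_adjoin E' Fx0 nNx0))) (dim_eq_refl _ _ 1).
  by rewrite Upsilon_norm1.
have nNa : ~ N a by move/norms_a.
have Ea := elementary2_adjoin E (a_neq0 : units_of a).
have := dim_eq_trans (dim_eq_adjoin E (a_neq0 : units_of a) nNa)
  (dim_eq_quot_iso Ea E' (quot_iso_units_adjoin hN)).
by rewrite Upsilon_nnorm1.
Qed.

Lemma qbasis_units_decomp J R :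
  qbasis normT (@squares_of K) J -> qbasis (fixedT s) normT R ->
  exists w : K -> K,
  [/\ qbasis (@units_of K) (@squares_of K) (fun x => (J x \/ R x) \/ img w J x),
      (forall y, J y -> squares_of (y / normK s (w y))),
      (forall y z, J y -> J z -> w y = w z -> y = z),
      (forall x, J x \/ R x -> fixedT s x) &
      (forall x, J x \/ R x -> ~ img w J x) /\ (forall x, J x -> ~ R x)].
Proof.
move=> qJ qR.
have qJR := qbasis_tower elementary2_fixedT_normT elementary2_normT_squares qJ qR.
have [w [qW winj wP]] := quot_iso_qbasis_pre elementary2_units_fixedT
  elementary2_normT_squares quot_iso_normK qJ.
have JRF x : J x \/ R x -> fixedT s x.
  by case=> [/(qbasis_sub qJ) /normT_fixedT|/(qbasis_sub qR)].
exists w; split=> //.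
  exact: qbasis_tower elementary2_units_fixedT elementary2_fixedT_squares qJR qW.
split; first by move=> x /JRF Fx Wx; exact: qbasis_notin qW Wx Fx.
by move=> x /(qbasis_sub qJ) Nx Rx; exact: qbasis_notin qR Rx Nx.
Qed.

End QuadExt.

(** * Equivariant isomorphisms of square class groups *)

Section Equivariant.
Variables (K1 K2 : fieldType) (s1 : {rmorphism K1 -> K1}) (s2 : {rmorphism K2 -> K2}).

Local Notation T1 := (@units_of K1). Local Notation T2 := (@units_of K2).
Local Notation Q1 := (@squares_of K1). Local Notation Q2 := (@squares_of K2).

Definition equivariant (phi : K1 -> K2) :=
  forall x, x != 0 -> squares_of (phi (s1 x) / s2 (phi x)).

Lemma T_isoP : T_iso s1 s2 <-> exists phi, quot_iso T1 Q1 T2 Q2 phi /\ equivariant phi.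
Proof.
have sq := @subgroup_squares K2.
split=> [[phi [p0 [pm [ps [pi psurj]]]]] | [phi [qp eqv]]]; exists phi.
  split; last by move=> x x0; apply/sq_equivP; [rewrite fmorph_eq0 p0 | apply: ps].
  split=> // [x y x0 y0 | x x0 | y y0].
  - by apply/sq_equivP; [rewrite mulf_neq0 ?p0 | apply: pm].
  - split=> [h | [z [z0 ez]]].
      have : sq_equiv (phi x) 1 by apply/sq_equivP; rewrite ?oner_neq0 ?divr1.
      by move/(pi _ x0)/sq_equivP; rewrite oner_neq0 divr1 => /(_ isT).
    have /sq_equivP := pm z z z0 z0; rewrite mulf_neq0 ?p0 // ez expr2 => /(_ isT) h.
    by have := subgroupM sq h (squares_sqr (p0 _ z0)); rewrite divfK // mulf_neq0 ?p0.
  - have [x [x0 /sq_equivP h]] := psurj y y0; exists x; split=> //.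
    by rewrite -invf_div; apply: (subgroupV sq); apply: h.
have p0 x : x != 0 -> phi x != 0 by apply: (quot_iso_mem qp).
split=> //; split.
  move=> x y x0 y0; apply/sq_equivP; last exact: (quot_iso_morph qp).
  by rewrite mulf_neq0 ?p0.
split.
  by move=> x x0; apply/sq_equivP; [rewrite fmorph_eq0; apply: p0 | apply: eqv].
split.
  move=> x x0 /sq_equivP; rewrite oner_neq0 divr1 => /(_ isT) h.
  by apply/sq_equivP; rewrite ?oner_neq0 // divr1; apply/(quot_iso_ker qp).
move=> y y0; have [x [x0 h]] := quot_iso_surj qp y0.
exists x; split=> //; apply/sq_equivP => //.
by rewrite -invf_div; apply: (subgroupV sq).
Qed.

Variable phi : K1 -> K2.
Hypothesis qp : quot_iso T1 Q1 T2 Q2 phi.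

Let E1 := elementary2_units K1.
Let E2 := elementary2_units K2.
Let sq2 := @subgroup_squares K2.
Let phi0 x : x != 0 -> phi x != 0. Proof. exact: (quot_iso_mem qp). Qed.
Let phiE x y : x != 0 -> y != 0 -> Q2 (phi x / phi y) <-> Q1 (x / y).
Proof. exact: (quot_isoE E1 E2 qp). Qed.

Lemma equivariant_qbasis B : qbasis T1 Q1 B ->
  (forall b, B b -> Q2 (phi (s1 b) / s2 (phi b))) -> equivariant phi.
Proof.
move=> qB hB x x0; have BS := qbasis_sub qB.
have [u [uB hu]] := qbasis_spans qB x0.
have uT b : b \in u -> b != 0 by move/uB/BS.
have Tu : \prod_(b <- u) b != 0 by apply: (elem_prod E1).
have s1T b : b \in u -> s1 b != 0 by move=> /uT; rewrite fmorph_eq0.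
have h1 : Q2 (phi (s1 x) / phi (\prod_(b <- u) s1 b)).
  apply/phiE; rewrite ?fmorph_eq0 //; last by rewrite -rmorph_prod; apply: squares_morph_div.
  exact: (elem_prod E1).
have h2 : Q2 (phi (\prod_(b <- u) s1 b) / \prod_(b <- u) phi (s1 b)).
  have := quot_iso_prod E1 E2 qp (s := map s1 u).
  by rewrite !big_map; apply=> _ /mapP[b /s1T b0 ->].
have h3 : Q2 (\prod_(b <- u) phi (s1 b) / \prod_(b <- u) s2 (phi b)).
  by apply: (quot_prod sq2) => b /uB /hB.
have h4 : Q2 (s2 (\prod_(b <- u) phi b) / s2 (phi x)).
  apply: squares_morph_div; apply: (quot_trans sq2 (quot_sym sq2 (quot_iso_prod E1 E2 qp uT))).
  by apply/phiE => //; apply: (quot_sym (@subgroup_squares K1) hu).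
apply: (quot_trans sq2 h1); apply: (quot_trans sq2 h2); apply: (quot_trans sq2 h3).
by rewrite -rmorph_prod.
Qed.

Lemma equivariant_at_fixed b c : fixedT s1 b -> fixedT s2 c ->
  Q2 (phi b / c) -> Q2 (phi (s1 b) / s2 (phi b)).
Proof.
move=> [b0 hb] [c0 hc] hbc.
have h1 : Q2 (phi (s1 b) / phi b) by apply/phiE; rewrite ?fmorph_eq0.
apply: (quot_trans sq2 h1); apply: (quot_trans sq2 hbc).
apply: (quot_trans sq2 (quot_sym sq2 hc)).
exact: (squares_morph_div s2 (quot_sym sq2 hbc)).
Qed.

(* [y = normK b] gives [s b = y b] modulo squares. *)
Lemma equivariant_at_section y b y' c :
  Q1 (y / normK s1 b) -> Q2 (y' / normK s2 c) ->
  Q2 (phi y / y') -> Q2 (phi b / c) -> Q2 (phi (s1 b) / s2 (phi b)).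
Proof.
move=> hb hc hyy' hbc; have hb' := squares_normK_conj hb.
have /andP[sb0 /[!mulf_eq0] /norP[y0 b0]] := quot_neq0 (@subgroup_squares K1) hb'.
have yb0 : y * b != 0 by rewrite mulf_neq0.
apply: (quot_trans sq2 (proj2 (phiE sb0 yb0) hb')).
apply: (quot_trans sq2 (quot_iso_morph qp y0 b0)).
apply: (quot_trans sq2 (quot_mul sq2 hyy' hbc)).
apply: (quot_trans sq2 (quot_sym sq2 (squares_normK_conj hc))).
exact: (squares_morph_div s2 (quot_sym sq2 hbc)).
Qed.

Hypothesis eqv : equivariant phi.

Lemma equivariant_normK x : x != 0 -> Q2 (phi (normK s1 x) / normK s2 (phi x)).
Proof.
move=> x0; have sx0 : s1 x != 0 by rewrite fmorph_eq0.
apply: (quot_trans sq2 (quot_iso_morph qp x0 sx0)).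
exact: (quot_mul sq2 (quot_refl sq2 (phi0 x0)) (eqv x0)).
Qed.

Lemma equivariant_fixedT x : fixedT s1 x -> fixedT s2 (phi x).
Proof.
move=> [x0 hx]; split; first exact: phi0.
apply: (quot_trans sq2 (quot_sym sq2 (eqv x0))).
by apply/phiE => //; rewrite fmorph_eq0.
Qed.

Lemma equivariant_fixedT_surj y : fixedT s2 y -> exists x, fixedT s1 x /\ Q2 (y / phi x).
Proof.
move=> [y0 hy]; have [x [x0 h]] := quot_iso_surj qp y0.
exists x; split=> //; split=> //; apply/phiE; rewrite ?fmorph_eq0 //.
apply: (quot_trans sq2 (eqv x0)).
apply: (quot_trans sq2 (squares_morph_div s2 (quot_sym sq2 h))).
exact: (quot_trans sq2 hy).
Qed.

End Equivariant.

Section Transport.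
Variables (F1 K1 F2 K2 : fieldType) (i1 : {rmorphism F1 -> K1}) (i2 : {rmorphism F2 -> K2})
  (a1 : F1) (a2 : F2) (r1 : K1) (r2 : K2)
  (s1 : {rmorphism K1 -> K1}) (s2 : {rmorphism K2 -> K2}).
Hypotheses (qs1 : quad_setting i1 a1 r1 s1) (qs2 : quad_setting i2 a2 r2 s2).
Variable phi : K1 -> K2.
Hypotheses (qp : quot_iso (@units_of K1) (@squares_of K1) (@units_of K2) (@squares_of K2) phi)
  (eqv : equivariant s1 s2 phi).

Let E1 := elementary2_units K1.
Let E2 := elementary2_units K2.
Let sq2 := @subgroup_squares K2.

Lemma equivariant_normT x : normT i1 s1 x -> normT i2 s2 (phi x).
Proof.
move=> Nx; have x0 := subgroup_neq0 (subgroup_normT qs1) Nx.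
have [w [w0 hw]] := quot_iso_surj (quot_iso_normK qs1) Nx.
have hx : squares_of (phi x / phi (normK s1 w)).
  by apply/(quot_isoE E1 E2 qp) => //; apply: normK_neq0.
apply: (quot_memL (subgroup_normT qs2) (squares_normT qs2 hx)).
apply: (quot_memL (subgroup_normT qs2) (squares_normT qs2 (equivariant_normK qp eqv w0))).
by apply: (quot_iso_mem (quot_iso_normK qs2)); apply: (quot_iso_mem qp).
Qed.

Lemma equivariant_normT_surj y :
  normT i2 s2 y -> exists x, normT i1 s1 x /\ squares_of (y / phi x).
Proof.
move=> Ny; have [w2 [w20 h]] := quot_iso_surj (quot_iso_normK qs2) Ny.
have [w [w0 hw]] := quot_iso_surj qp w20.
exists (normK s1 w); split; first exact: (quot_iso_mem (quot_iso_normK qs1)).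
apply: (quot_trans sq2 h); apply: (quot_trans sq2 (squares_normK_div s2 hw)).
exact: (quot_sym sq2 (equivariant_normK qp eqv w0)).
Qed.

Lemma equivariant_quot_iso :
  quot_iso (normT i1 s1) (@squares_of K1) (normT i2 s2) (@squares_of K2) phi /\
  quot_iso (fixedT s1) (normT i1 s1) (fixedT s2) (normT i2 s2) phi.
Proof.
have [qN qU] := quot_iso_sub E1 E2 (elementary2_normT_squares qs1)
  (elementary2_normT_squares qs2) (subgroup_neq0 (subgroup_normT qs1)) qp
  equivariant_normT equivariant_normT_surj.
split=> //.
have fixedT_surj y : fixedT s2 y -> exists x, fixedT s1 x /\ normT i2 s2 (y / phi x).
  move=> /(equivariant_fixedT_surj qp eqv) [x [Fx h]].
  by exists x; split=> //; apply: (squares_normT qs2).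
have [qF _] := quot_iso_sub (elementary2_units_normT qs1) (elementary2_units_normT qs2)
  (elementary2_fixedT_normT qs1) (elementary2_fixedT_normT qs2) (fun x (h : fixedT s1 x) => h.1)
  qU (equivariant_fixedT qp eqv) fixedT_surj.
exact: qF.
Qed.

End Transport.

Section Main.
Variables (F1 K1 F2 K2 : fieldType) (i1 : {rmorphism F1 -> K1}) (i2 : {rmorphism F2 -> K2})
  (a1 : F1) (a2 : F2) (r1 : K1) (r2 : K2)
  (s1 : {rmorphism K1 -> K1}) (s2 : {rmorphism K2 -> K2}).
Hypotheses (qs1 : quad_setting i1 a1 r1 s1) (qs2 : quad_setting i2 a2 r2 s2).

Local Notation U1 := (Upsilon i1 s1).
Local Notation U2 := (Upsilon i2 s2).

Lemma dim_plus_eq_of_T_iso : T_iso s1 s2 ->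
  dim_plus_eq (2 * U1) (@units_of F1) (norms_of i1 s1)
              (2 * U2) (@units_of F2) (norms_of i2 s2) /\
  dim_plus_eq U2 (norms_of i1 s1) (@squares_of F1) U1 (norms_of i2 s2) (@squares_of F2).
Proof.
move=> /T_isoP [phi [qp eqv]]; have [qN qF] := equivariant_quot_iso qs1 qs2 qp eqv.
have dN := dim_eq_quot_iso (elementary2_normT_squares qs1) (elementary2_normT_squares qs2) qN.
have dF := dim_eq_quot_iso (elementary2_fixedT_normT qs1) (elementary2_fixedT_normT qs2) qF.
split.
  have := dim_eq_trans (dim_eq_trans (dim_eq_units qs1) dF) (dim_eq_sym (dim_eq_units qs2)).
  move/(dim_plus_eq_of_dim_eq (elementary2_units_norms qs1)).
  by rewrite !addn0 [(1 + _)%N]addnC; apply: dim_plus_eq_cancel.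
have := dim_eq_trans (dim_eq_trans (dim_eq_norms qs1) dN) (dim_eq_sym (dim_eq_norms qs2)).
by rewrite !addn0; apply: dim_plus_eq_of_dim_eq (elementary2_norms_squares qs1).
Qed.

Lemma T_iso_of_bases J1 R1 J2 R2 :
  qbasis (normT i1 s1) (@squares_of K1) J1 -> qbasis (fixedT s1) (normT i1 s1) R1 ->
  qbasis (normT i2 s2) (@squares_of K2) J2 -> qbasis (fixedT s2) (normT i2 s2) R2 ->
  equipotent {x | J1 x} {x | J2 x} -> equipotent {x | R1 x} {x | R2 x} -> T_iso s1 s2.
Proof.
move=> qJ1 qR1 qJ2 qR2 /(bij_on_equipotent 0) [bJ pJ] /(bij_on_equipotent 0) [bR pR].
have [w1 [qT1 w1N w1inj JRF1 [dW1 dJR1]]] := qbasis_units_decomp qs1 qJ1 qR1.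
have [w2 [qT2 w2N w2inj JRF2 [dW2 dJR2]]] := qbasis_units_decomp qs2 qJ2 qR2.
have [w1' [pW1' w1'K]] := bij_on_inv 0 (bij_on_img w1inj).
have pJR := bij_on_union pJ pR dJR1 dJR2.
have pW := bij_on_comp (bij_on_comp pW1' pJ) (bij_on_img w2inj).
have [phi [qp phiB]] := bij_on_quot_iso (elementary2_units K1) (elementary2_units K2)
  qT1 qT2 (bij_on_union pJR pW dW1 dW2).
pose g x := if boolp.asbool (J1 x \/ R1 x) then if boolp.asbool (J1 x) then bJ x else bR x
             else w2 (bJ (w1' x)).
have gJR x : J1 x \/ R1 x -> g x = if boolp.asbool (J1 x) then bJ x else bR x.
  by move=> JRx; rewrite /g (boolp.asboolT JRx).
apply/T_isoP; exists phi; split=> //.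
apply: (equivariant_qbasis qp qT1) => b [JRb | [y [Jy ->]]].
  have Fgb : fixedT s2 (g b).
    by rewrite (gJR _ JRb); apply: JRF2; case: pJR => + _ _; apply.
  exact: (equivariant_at_fixed qp (JRF1 _ JRb) Fgb (phiB _ (or_introl JRb))).
have Jy' : J2 (bJ y) by case: pJ => + _ _; apply.
have gw : g (w1 y) = w2 (bJ y).
  by rewrite /g (boolp.asboolF (fun h => dW1 _ h (ex_intro _ y (conj Jy erefl)))) w1'K.
have gy : g y = bJ y by rewrite (gJR _ (or_introl Jy)) (boolp.asboolT Jy).
apply: (equivariant_at_section qp (w1N _ Jy) (w2N _ Jy')).
  by rewrite -gy; apply: phiB; left; left.
by rewrite -gw; apply: phiB; right; exists y.
Qed.

Lemma T_iso_of_dim_plus_eq :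
  dim_plus_eq (2 * U1) (@units_of F1) (norms_of i1 s1)
              (2 * U2) (@units_of F2) (norms_of i2 s2) ->
  dim_plus_eq U2 (norms_of i1 s1) (@squares_of F1) U1 (norms_of i2 s2) (@squares_of F2) ->
  T_iso s1 s2.
Proof.
move=> hU hN.
have hR := dim_plus_eq_transl (dim_eq_sym (dim_eq_units qs1))
  (dim_plus_eq_trans hU (dim_eq_units qs2)).
have e : (2 * U1 + (2 * U2 + 1) = 1 + (2 * U1 + 2 * U2))%N by rewrite addnA addnC.
rewrite e in hR.
have [R1 [R2 [qR1 [qR2 /(@equipotent_cancel 0) eR]]]] := dim_plus_eq_cancel (n := 0) (m := 0) hR.
have hJ := dim_plus_eq_transl (dim_eq_sym (dim_eq_norms qs1))
  (dim_plus_eq_trans hN (dim_eq_norms qs2)).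
rewrite addn0 in hJ.
have [J1 [J2 [qJ1 [qJ2 /(@equipotent_cancel 0) eJ]]]] := dim_plus_eq_cancel (n := 0) (m := 0) hJ.
exact: T_iso_of_bases qJ1 qR1 qJ2 qR2 eJ eR.
Qed.

End Main.

Theorem corollary3
  (F1 K1 F2 K2 : fieldType)
  (i1 : {rmorphism F1 -> K1}) (i2 : {rmorphism F2 -> K2})
  (a1 : F1) (a2 : F2) (r1 : K1) (r2 : K2)
  (s1 : {rmorphism K1 -> K1}) (s2 : {rmorphism K2 -> K2}) :
  (2%:R : F1) != 0 -> (2%:R : F2) != 0 ->
  a1 != 0 -> ~ squares_of a1 -> a2 != 0 -> ~ squares_of a2 ->
  is_quad_ext i1 a1 r1 -> is_quad_ext i2 a2 r2 ->
  is_gal_generator i1 s1 -> is_gal_generator i2 s2 ->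
  T_iso s1 s2 <->
  (dim_plus_eq (2 * Upsilon i1 s1)%N (@units_of F1) (norms_of i1 s1)
               (2 * Upsilon i2 s2)%N (@units_of F2) (norms_of i2 s2) /\
   dim_plus_eq (Upsilon i2 s2) (norms_of i1 s1) (@squares_of F1)
               (Upsilon i1 s1) (norms_of i2 s2) (@squares_of F2)).
Proof.
move=> c1 c2 a10 na1 a20 na2 qe1 qe2 gg1 gg2.
have qs1 : quad_setting i1 a1 r1 s1 by [].
have qs2 : quad_setting i2 a2 r2 s2 by [].
split; first exact: dim_plus_eq_of_T_iso qs1 qs2.
by case; apply: T_iso_of_dim_plus_eq qs1 qs2.
Qed.
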